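(* Let $0<\gamma<1$, $\Omega=(a,b)\times(c,d)$, $u\in C^6([a,b]\times[c,d])$, and let $u_Q$ be its tensor-product piecewise quadratic interpolant (see context). Then there is a constant $C$, depending on $u,\gamma,a,b,c,d$ but not on $M_x,M_y,i,j$, such that for all $M_x,M_y\ge2$, $i\in\{1,\dots,2M_x-1\}$, $j\in\{1,\dots,2M_y-1\}$, $$\left|\int_c^d\!\!\int_a^b\frac{u(x,y)-u_Q(x,y)}{\big((x_{i/2}-x)^2+(y_{j/2}-y)^2\big)^{\gamma/2}}\,dx\,dy\right|\le C\Big(h_x^4\eta_{i/2}^{-\gamma}+h_y^4\tilde\eta_{j/2}^{-\gamma}+h_x^{5-\gamma}+h_y^{5-\gamma}\Big),$$ where $\eta_{i/2}=\min\{x_{i/2}-a,\,b-x_{i/2}\}$ and $\tilde\eta_{j/2}=\min\{y_{j/2}-c,\,d-y_{j/2}\}$.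
   Context: Let $a<b$, $c<d$, $M_x,M_y\ge2$ integers, $h_x=(b-a)/M_x$, $h_y=(d-c)/M_y$, $x_s=a+sh_x$ ($s\in\{0,\tfrac12,\dots,M_x\}$), $y_s=c+sh_y$ ($s\in\{0,\tfrac12,\dots,M_y\}$). On $[a,b]$ the piecewise quadratic Lagrange basis $\phi_s(x)$ is: for integers $0\le l\le M_x$, $\phi_l(x)=\frac{x-x_{l-1}}{h_x}\cdot\frac{2x-(x_l+x_{l-1})}{h_x}$ on $[x_{l-1},x_l]\cap[a,b]$, $\phi_l(x)=\frac{x_{l+1}-x}{h_x}\cdot\frac{(x_{l+1}+x_l)-2x}{h_x}$ on $[x_l,x_{l+1}]\cap[a,b]$, $0$ otherwise; for $l=1,\dots,M_x$, $\phi_{l-\frac12}(x)=\frac{4(x-x_{l-1})(x_l-x)}{h_x^2}$ on $[x_{l-1},x_l]$, $0$ otherwise. The basis $\phi_s(y)$ on $[c,d]$ is defined analogously with $y_s,h_y,M_y$. The interpolant is $$u_Q(x,y)=\sum_{l=0}^{2M_x}\sum_{r=0}^{2M_y}\phi_{l/2}(x)\phi_{r/2}(y)\,u(x_{l/2},y_{r/2}).$$ *)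

From Stdlib Require Import Reals Lra ClassicalEpsilon.
Open Scope R_scope.

(** Total Riemann integral: the Riemann integral of f over [a,b] when f is
    Riemann integrable there, and 0 otherwise (value independent of the proof). *)
Definition RInt_tot (f : R -> R) (a b : R) : R :=
  match excluded_middle_informative (inhabited (Riemann_integrable f a b)) with
  | left H => RiemannInt (epsilon H (fun _ => True))
  | right _ => 0
  end.

Definition in_rect (a b c d x y : R) : Prop := a <= x <= b /\ c <= y <= d.

Definition cont_on_rect (f : R -> R -> R) (a b c d : R) : Prop :=
  forall x y, in_rect a b c d x y ->
  forall eps, 0 < eps -> exists delta, 0 < delta /\
    forall x' y', in_rect a b c d x' y' -> Rabs (x' - x) < delta ->
      Rabs (y' - y) < delta -> Rabs (f x' y' - f x y) < eps.

(** g is the partial x-derivative of f on the closed rectangle (one-sided on the boundary) *)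
Definition has_dx_on_rect (f g : R -> R -> R) (a b c d : R) : Prop :=
  forall x y, in_rect a b c d x y ->
  forall eps, 0 < eps -> exists delta, 0 < delta /\
    forall h, h <> 0 -> Rabs h < delta -> in_rect a b c d (x + h) y ->
      Rabs ((f (x + h) y - f x y) / h - g x y) < eps.

Definition has_dy_on_rect (f g : R -> R -> R) (a b c d : R) : Prop :=
  forall x y, in_rect a b c d x y ->
  forall eps, 0 < eps -> exists delta, 0 < delta /\
    forall h, h <> 0 -> Rabs h < delta -> in_rect a b c d x (y + h) ->
      Rabs ((f x (y + h) - f x y) / h - g x y) < eps.

(** u ∈ C^k([a,b]×[c,d]): all partial derivatives D p q = ∂x^p ∂y^q u with
    p+q ≤ k exist and are continuous on the closed rectangle. *)
Definition Ck_rect (k : nat) (u : R -> R -> R) (a b c d : R) : Prop :=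
  exists D : nat -> nat -> R -> R -> R,
    (forall x y, in_rect a b c d x y -> D 0%nat 0%nat x y = u x y) /\
    (forall p q, (p + q <= k)%nat -> cont_on_rect (D p q) a b c d) /\
    (forall p q, (p + q < k)%nat ->
       has_dx_on_rect (D p q) (D (S p) q) a b c d /\
       has_dy_on_rect (D p q) (D p (S q)) a b c d).

Definition node (a h s : R) : R := a + s * h.

Definition phi_int (a b h : R) (k : nat) (x : R) : R :=
  let xm := node a h (INR k - 1) in
  let x0 := node a h (INR k) in
  let xp := node a h (INR k + 1) in
  if Rle_dec a x then if Rle_dec x b then
    if Rle_dec xm x then if Rle_dec x x0 then
      (x - xm) / h * ((2 * x - (x0 + xm)) / h)
    else if Rle_dec x xp then (xp - x) / h * (((xp + x0) - 2 * x) / h) else 0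
    else 0
  else 0 else 0.

(** half-index basis function phi_{k-1/2}, k = 1..M *)
Definition phi_half (a h : R) (k : nat) (x : R) : R :=
  let xm := node a h (INR k - 1) in
  let x0 := node a h (INR k) in
  if Rle_dec xm x then if Rle_dec x x0 then 4 * (x - xm) * (x0 - x) / (h * h) else 0
  else 0.

(** phi_{l/2} on [a,b] with M subintervals, l = 0..2M *)
Definition phiQ (a b : R) (M l : nat) (x : R) : R :=
  let h := (b - a) / INR M in
  if Nat.even l then phi_int a b h (Nat.div2 l) x
  else phi_half a h (Nat.div2 (S l)) x.

Definition uQ (u : R -> R -> R) (a b c d : R) (Mx My : nat) (x y : R) : R :=
  let hx := (b - a) / INR Mx in
  let hy := (d - c) / INR My in
  sum_f_R0 (fun l =>
    sum_f_R0 (fun r =>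
      phiQ a b Mx l x * phiQ c d My r y *
      u (node a hx (INR l / 2)) (node c hy (INR r / 2))) (2 * My)%nat) (2 * Mx)%nat.

From Stdlib Require Import Reals Lra Lia Classical ClassicalEpsilon.
From Coquelicot Require Import Coquelicot.
Open Scope R_scope.

(* The double integral is approximated by iterated midpoint sums on grids refining the
   interpolation mesh; their tags never meet the singular point, so it suffices to bound
   these sums uniformly.  Write [u - uQ = (u - I_x u) + I_x (u - I_y u)].  On a cell of
   width [h] with midpoint [Q] the quadratic interpolation error of a [C^4] function is
   [c3 ((z - Q)^3 - h^2/4 (z - Q)) + O(h^4)], whose cubic part is odd about [Q]: at tags
   symmetric about [Q] it only sees the oscillation of the weight.  The weight
   [x |-> |(x_i - x, y_j - y)|^-gamma] is unimodal, so its oscillations add up to at most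
   twice its maximum [|y_j - y|^-gamma]; this gives [O(h_x^4 |y_j - y|^-gamma)] on every
   line, and the sum of [|y_j - y|^-gamma] over the tags stays bounded because
   [gamma < 1].  The result is the bound [C (h_x^4 + h_y^4)], which implies the stated one
   since [eta <= (b - a)/2] and [eta' <= (d - c)/2] bound [eta^-gamma] and [eta'^-gamma]
   from below. *)

(** * Finite sums *)

(* [sumN f n] has the [n] terms [f 0 + ... + f (n - 1)], unlike [sum_f_R0 f n]. *)
Fixpoint sumN (f : nat -> R) (n : nat) : R :=
  match n with O => 0 | S n' => sumN f n' + f n' end.

Lemma sumN_ext f g n : (forall k, (k < n)%nat -> f k = g k) -> sumN f n = sumN g n.
Proof.
  induction n as [|n IH]; simpl; intros H; auto.
  rewrite IH, H; auto; intros; apply H; lia.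
Qed.

Lemma sumN_plus f g n : sumN (fun k => f k + g k) n = sumN f n + sumN g n.
Proof. induction n; simpl; lra. Qed.

Lemma sumN_minus f g n : sumN (fun k => f k - g k) n = sumN f n - sumN g n.
Proof. induction n; simpl; lra. Qed.

Lemma sumN_scal c f n : sumN (fun k => c * f k) n = c * sumN f n.
Proof. induction n as [|n IH]; simpl; [lra | rewrite IH; ring]. Qed.

Lemma sumN_le f g n : (forall k, (k < n)%nat -> f k <= g k) -> sumN f n <= sumN g n.
Proof.
  induction n as [|n IH]; simpl; intros H; [lra|].
  assert (f n <= g n) by (apply H; lia).
  assert (sumN f n <= sumN g n) by (apply IH; intros; apply H; lia).
  lra.
Qed.

Lemma sumN_abs f n : Rabs (sumN f n) <= sumN (fun k => Rabs (f k)) n.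
Proof.
  induction n; simpl; [rewrite Rabs_R0; lra|].
  eapply Rle_trans; [apply Rabs_triang | lra].
Qed.

Lemma sumN_const c n : sumN (fun _ => c) n = INR n * c.
Proof. induction n as [|n IH]; simpl sumN; [simpl; ring | rewrite IH, S_INR; ring]. Qed.

Lemma sumN_split f n m : sumN f (n + m) = sumN f n + sumN (fun k => f (n + k)%nat) m.
Proof.
  induction m as [|m IH]; simpl; [rewrite Nat.add_0_r; ring|].
  rewrite Nat.add_succ_r; simpl; rewrite IH; ring.
Qed.

Lemma sumN_shift f n : sumN f (S n) = f O + sumN (fun k => f (S k)) n.
Proof. replace (S n) with (1 + n)%nat by lia. rewrite sumN_split; simpl; ring. Qed.

Lemma sumN_rev f n : sumN f n = sumN (fun k => f (n - 1 - k)%nat) n.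
Proof.
  revert f; induction n as [|n IH]; intros f; [reflexivity|].
  rewrite sumN_shift; simpl sumN. rewrite (IH (fun k => f (S k))).
  replace (S n - 1 - n)%nat with O by lia. rewrite Rplus_comm.
  f_equal; [apply sumN_ext; intros; f_equal; lia | f_equal; lia].
Qed.

Lemma sumN_block f M B :
  sumN f (M * B) = sumN (fun e => sumN (fun q => f (e * B + q)%nat) B) M.
Proof.
  induction M as [|M IH]; [reflexivity|].
  replace (S M * B)%nat with (M * B + B)%nat by lia.
  rewrite sumN_split, IH; reflexivity.
Qed.

Lemma sumN_swap (f : nat -> nat -> R) n m :
  sumN (fun i => sumN (fun j => f i j) m) n = sumN (fun j => sumN (fun i => f i j) n) m.
Proof.
  induction n as [|n IH]; simpl; [rewrite sumN_const; ring|].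
  rewrite IH, <- sumN_plus; reflexivity.
Qed.

Lemma sumN_telescope (F : nat -> R) n : sumN (fun k => F (S k) - F k) n = F n - F O.
Proof. induction n as [|n IH]; simpl; [ring | rewrite IH; ring]. Qed.

Lemma sumN_delta (v : R) k n :
  (k < n)%nat -> sumN (fun l => if Nat.eqb l k then v else 0) n = v.
Proof.
  induction n as [|n IH]; intros H; [lia|]; simpl.
  destruct (Nat.eqb_spec n k) as [->|E].
  - rewrite (sumN_ext _ (fun _ => 0)), sumN_const; [ring|].
    intros l Hl; destruct (Nat.eqb_spec l k); [lia | auto].
  - rewrite IH; [ring | lia].
Qed.

Lemma sum_f_R0_sumN f n : sum_f_R0 f n = sumN f (S n).
Proof. induction n as [|n IH]; simpl; [ring | rewrite IH; reflexivity]. Qed.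

(** * Midpoint sums and iterated integrals *)

Definition midpoint_sum (f : R -> R) (a b : R) (N : nat) : R :=
  let dl := (b - a) / INR N in sumN (fun k => dl * f (a + (INR k + /2) * dl)) N.

Lemma Riemann_sum_iota (f : R -> R) g p N k :
  Riemann_sum f (SF_seq_f2 g (seq.map p (seq.iota k (S (S N))))) =
  sumN (fun i => (p (S (k + i)) - p (k + i)%nat) * f (g (p (k + i)%nat) (p (S (k + i))))) (S N).
Proof.
  revert k; induction N as [|N IH]; intros k.
  - simpl. rewrite SF_cons_f2 by (simpl; lia). rewrite Riemann_sum_cons.
    simpl. rewrite Riemann_sum_zero; [|apply SF_sorted_f2; simpl; auto | reflexivity].
    simpl. rewrite Nat.add_0_r.
    change (plus ((p (S k) - p k) * f (g (p k) (p (S k)))) zero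
            = 0 + (p (S k) - p k) * f (g (p k) (p (S k)))).
    rewrite plus_zero_r, Rplus_0_l; reflexivity.
  - change (seq.map p (seq.iota k (S (S (S N)))))
      with (@cons R (p k) (seq.map p (seq.iota (S k) (S (S N))))).
    rewrite SF_cons_f2 by (simpl; lia). rewrite Riemann_sum_cons, IH, (sumN_shift _ (S N)).
    simpl SF_h; simpl seq.head. rewrite Nat.add_0_r.
    change (plus ?x ?y) with (x + y). change (scal ?x ?y) with (x * y).
    f_equal. apply sumN_ext; intros i _. rewrite Nat.add_succ_r; reflexivity.
Qed.

Lemma RInt_midpoint_sum (f : R -> R) a b : a < b -> ex_RInt f a b ->
  forall eps, 0 < eps -> exists N0, forall N, (N0 < N)%nat ->
  Rabs (RInt f a b - midpoint_sum f a b N) < eps.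
Proof.
  intros Hab Hex eps Heps.
  pose proof (RInt_correct f a b Hex) as H.
  unfold is_RInt, filterlim, filter_le, filtermap in H.
  specialize (H (ball (RInt f a b) (mkposreal eps Heps)) (locally_ball _ _)).
  destruct H as [delta Hd].
  destruct (seq_step_unif_part_ex a b delta) as [N0 HN0].
  rewrite seq_step_unif_part in HN0.
  exists N0. intros [|N] HN; [lia|].
  set (ptd := SF_seq_f2 (fun x y => (x + y) / 2) (unif_part a b N)).
  destruct (Riemann_fine_unif_part (fun x y => (x + y) / 2) a b N) as [H1 [H2 [H3 H4]]];
    [intros; lra | lra |].
  assert (Hle : INR N0 <= INR N) by (apply le_INR; lia).
  assert (Hpos0 : 0 < INR N0 + 1) by (pose proof (pos_INR N0); lra).
  assert (Hstep : seq_step (SF_lx ptd) < delta).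
  { eapply Rle_lt_trans; [apply H1|]. eapply Rle_lt_trans; [|apply HN0].
    rewrite Rabs_right; [|apply Rle_ge, Rdiv_le_0_compat; lra].
    apply Rmult_le_compat_l; [lra|]. apply Rinv_le_contravar; lra. }
  specialize (Hd ptd Hstep).
  assert (HP : pointed_subdiv ptd /\ SF_h ptd = Rmin a b
               /\ seq.last (SF_h ptd) (SF_lx ptd) = Rmax a b)
    by (rewrite Rmin_left, Rmax_right by lra; auto).
  specialize (Hd HP). clear HP.
  change (Rabs (scal (sign (b - a)) (Riemann_sum f ptd) - RInt f a b) < eps) in Hd.
  rewrite sign_eq_1 in Hd by lra.
  change (scal 1 (Riemann_sum f ptd)) with (1 * Riemann_sum f ptd) in Hd.
  rewrite Rmult_1_l in Hd.
  unfold ptd, unif_part, seq.mkseq in Hd. rewrite Riemann_sum_iota in Hd.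
  rewrite Rabs_minus_sym. unfold midpoint_sum.
  erewrite sumN_ext; [exact Hd|].
  intros k _. rewrite !S_INR, Nat.add_0_l.
  f_equal; [field; lra | f_equal; field; lra].
Qed.

Lemma RInt_tot_RInt f a b : ex_RInt f a b -> RInt_tot f a b = RInt f a b.
Proof.
  intros H. unfold RInt_tot. destruct excluded_middle_informative as [Hi|Hn].
  - rewrite (RInt_Reals f a b (epsilon Hi (fun _ => True))). reflexivity.
  - exfalso. apply Hn. constructor. apply ex_RInt_Reals_0; auto.
Qed.

Lemma RInt_tot_not_ex f a b : ~ ex_RInt f a b -> RInt_tot f a b = 0.
Proof.
  intros H. unfold RInt_tot. destruct excluded_middle_informative as [Hi|Hn]; auto.
  exfalso. apply H. destruct Hi as [pr]. apply ex_RInt_Reals_1; auto.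
Qed.

Lemma ex_uniform_threshold (P : nat -> nat -> Prop) K :
  (forall k, (k < K)%nat -> exists n0, forall n, (n0 < n)%nat -> P k n) ->
  exists n0, forall k n, (k < K)%nat -> (n0 < n)%nat -> P k n.
Proof.
  induction K as [|K IH]; intros H; [exists O; intros; lia|].
  destruct IH as [n1 H1]; [intros k Hk; apply H; lia|].
  destruct (H K ltac:(lia)) as [n2 H2].
  exists (Nat.max n1 n2). intros k n Hk Hn.
  destruct (Nat.eq_dec k K) as [->|Hne]; [apply H2 | apply H1]; lia.
Qed.

(* Only the inner integrands at the outer tags need to be integrable: if the outer
   integrand is not, [RInt_tot] returns [0], which is below [B]. *)
Lemma RInt_tot2_le_of_midpoint_sums (f : R -> R -> R) a b c d Kx Ky B :
  a < b -> c < d -> (1 <= Kx)%nat -> (1 <= Ky)%nat ->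
  (forall n k, (1 <= n)%nat -> (k < Ky * n)%nat ->
     ex_RInt (fun x => f x (c + (INR k + /2) * ((d - c) / INR (Ky * n)))) a b) ->
  (forall nx ny, (1 <= nx)%nat -> (1 <= ny)%nat ->
     Rabs (midpoint_sum (fun y => midpoint_sum (fun x => f x y) a b (Kx * nx)) c d (Ky * ny))
     <= B) ->
  Rabs (RInt_tot (fun y => RInt_tot (fun x => f x y) a b) c d) <= B.
Proof.
  intros Hab Hcd HKx HKy Hinner Hsum.
  set (F := fun y => RInt_tot (fun x => f x y) a b).
  assert (HB : 0 <= B) by (eapply Rle_trans; [apply Rabs_pos | apply (Hsum 1%nat 1%nat); lia]).
  destruct (classic (ex_RInt F c d)) as [HF|HF];
    [| rewrite RInt_tot_not_ex, Rabs_R0 by auto; exact HB].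
  rewrite RInt_tot_RInt by auto.
  apply le_epsilon; intros eps Heps.
  set (e2 := eps / (2 * (d - c))).
  assert (He2 : 0 < e2) by (apply Rdiv_lt_0_compat; lra).
  destruct (RInt_midpoint_sum F c d Hcd HF (eps / 2) ltac:(lra)) as [n0y Hy].
  set (ny := S n0y). set (Ny := (Ky * ny)%nat).
  specialize (Hy Ny ltac:(unfold Ny, ny; nia)).
  set (dy := (d - c) / INR Ny).
  assert (HNy : 0 < INR Ny) by (apply lt_0_INR; unfold Ny, ny; nia).
  set (tau := fun k : nat => c + (INR k + /2) * dy).
  assert (Hin : forall k, (k < Ny)%nat -> ex_RInt (fun x => f x (tau k)) a b)
    by (intros k Hk; apply Hinner; unfold Ny, ny in *; lia).
  destruct (ex_uniform_threshold (fun k n =>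
      Rabs (RInt (fun x => f x (tau k)) a b - midpoint_sum (fun x => f x (tau k)) a b (Kx * n))
      < e2) Ny) as [n0x Hx].
  { intros k Hk. destruct (RInt_midpoint_sum _ a b Hab (Hin k Hk) e2 He2) as [n0 Hn0].
    exists n0. intros n Hn. apply Hn0. nia. }
  set (G := fun y => midpoint_sum (fun x => f x y) a b (Kx * S n0x)).
  assert (HFG : Rabs (midpoint_sum F c d Ny - midpoint_sum G c d Ny) <= eps / 2).
  { unfold midpoint_sum at 1 2; fold dy tau. rewrite <- sumN_minus.
    eapply Rle_trans; [apply sumN_abs|].
    apply Rle_trans with (sumN (fun _ => dy * e2) Ny).
    - apply sumN_le. intros k Hk. rewrite <- Rmult_minus_distr_l, Rabs_mult, Rabs_right
        by (apply Rle_ge, Rdiv_le_0_compat; lra).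
      apply Rmult_le_compat_l; [apply Rdiv_le_0_compat; lra|].
      change (Rabs (RInt_tot (fun x => f x (tau k)) a b - G (tau k)) <= e2).
      rewrite RInt_tot_RInt by exact (Hin k Hk). left. exact (Hx k (S n0x) Hk ltac:(lia)).
    - rewrite sumN_const. right. unfold dy, e2. field. lra. }
  specialize (Hsum (S n0x) ny ltac:(lia) ltac:(unfold ny; lia)). fold Ny G in Hsum.
  replace (RInt F c d) with ((RInt F c d - midpoint_sum F c d Ny)
     + (midpoint_sum F c d Ny - midpoint_sum G c d Ny) + midpoint_sum G c d Ny) by ring.
  eapply Rle_trans; [apply Rabs_triang|].
  eapply Rle_trans; [apply Rplus_le_compat_r, Rabs_triang|]. lra.
Qed.

Lemma midpoint_sum_abs_le (F G : R -> R) a b N : a <= b ->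
  (forall k, (k < N)%nat -> Rabs (F (a + (INR k + /2) * ((b - a) / INR N)))
                            <= G (a + (INR k + /2) * ((b - a) / INR N))) ->
  Rabs (midpoint_sum F a b N) <= midpoint_sum G a b N.
Proof.
  intros Hab H. unfold midpoint_sum.
  assert (Hdl : 0 <= (b - a) / INR N).
  { destruct N; [simpl; rewrite Rdiv_0_r; lra|]. apply Rdiv_le_0_compat; [lra | apply lt_0_INR; lia]. }
  eapply Rle_trans; [apply sumN_abs|]. apply sumN_le. intros k Hk.
  rewrite Rabs_mult, Rabs_right by lra. apply Rmult_le_compat_l; auto.
Qed.

Lemma midpoint_sum_plus (F G : R -> R) a b N :
  midpoint_sum (fun x => F x + G x) a b N = midpoint_sum F a b N + midpoint_sum G a b N.
Proof. unfold midpoint_sum. rewrite <- sumN_plus. apply sumN_ext. intros; ring. Qed.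

Lemma midpoint_sum_scal c (F : R -> R) a b N :
  midpoint_sum (fun x => c * F x) a b N = c * midpoint_sum F a b N.
Proof. unfold midpoint_sum. rewrite <- sumN_scal. apply sumN_ext. intros; ring. Qed.

Lemma midpoint_sum_swap (F : R -> R -> R) a b c d Nx Ny :
  midpoint_sum (fun y => midpoint_sum (fun x => F x y) a b Nx) c d Ny
  = midpoint_sum (fun x => midpoint_sum (fun y => F x y) c d Ny) a b Nx.
Proof.
  unfold midpoint_sum.
  rewrite (sumN_ext _ (fun k => sumN (fun p => (d - c) / INR Ny * ((b - a) / INR Nx *
     F (a + (INR p + /2) * ((b - a) / INR Nx)) (c + (INR k + /2) * ((d - c) / INR Ny)))) Nx))
    by (intros; rewrite <- sumN_scal; reflexivity).
  rewrite sumN_swap. apply sumN_ext. intros p _. rewrite <- sumN_scal. apply sumN_ext. intros; ring.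
Qed.

Lemma midpoint_sum_ext (F G : R -> R) a b N :
  (forall x, F x = G x) -> midpoint_sum F a b N = midpoint_sum G a b N.
Proof. intros H. unfold midpoint_sum. apply sumN_ext. intros; rewrite H; reflexivity. Qed.

(** * Taylor expansion on an interval *)

Lemma abs_le_pow_S_of_derive (g g' : R -> R) al be m B k :
  al <= m <= be -> 0 <= B ->
  (forall z, al < z < be -> is_derive g z (g' z)) ->
  (forall z, al <= z <= be -> continuity_pt g z) ->
  g m = 0 ->
  (forall z, al <= z <= be -> Rabs (g' z) <= B * Rabs (z - m) ^ k) ->
  forall z, al <= z <= be -> Rabs (g z) <= B * Rabs (z - m) ^ (S k).
Proof.
  intros Hm HB Hd Hc Hg0 Hb z Hz.
  assert (Hbetween : forall x, Rmin m z <= x <= Rmax m z -> al <= x <= be).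
  { intros x Hx. split.
    - apply Rle_trans with (Rmin m z); [apply Rmin_glb|]; lra.
    - apply Rle_trans with (Rmax m z); [|apply Rmax_lub]; lra. }
  destruct (MVT_gen g m z g') as [c [Hc1 Hc2]].
  { intros x Hx. apply Hd. split.
    - apply Rle_lt_trans with (Rmin m z); [apply Rmin_glb|]; lra.
    - apply Rlt_le_trans with (Rmax m z); [|apply Rmax_lub]; lra. }
  { intros x Hx. apply Hc, Hbetween; lra. }
  assert (Hcm : Rabs (c - m) <= Rabs (z - m)).
  { unfold Rmin, Rmax in Hc1. destruct (Rle_dec m z);
    unfold Rabs; destruct (Rcase_abs (c - m)); destruct (Rcase_abs (z - m)); lra. }
  replace (g z) with (g' c * (z - m)) by lra.
  rewrite Rabs_mult; simpl.
  specialize (Hb c (Hbetween c ltac:(lra))).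
  assert (Rabs (c - m) ^ k <= Rabs (z - m) ^ k)
    by (apply pow_incr; split; [apply Rabs_pos | auto]).
  pose proof (Rabs_pos (z - m)).
  assert (0 <= Rabs (z - m) ^ k) by (apply pow_le; auto).
  assert (B * Rabs (c - m) ^ k <= B * Rabs (z - m) ^ k) by (apply Rmult_le_compat_l; auto).
  nra.
Qed.

(* Four applications of the previous lemma, to the successive Taylor remainders of [f3],
   [f2], [f1] and [f0]. *)
Lemma taylor3_remainder_bound (f0 f1 f2 f3 f4 : R -> R) al be m M4 :
  al <= m <= be -> 0 <= M4 ->
  (forall z, al < z < be -> is_derive f0 z (f1 z)) ->
  (forall z, al < z < be -> is_derive f1 z (f2 z)) ->
  (forall z, al < z < be -> is_derive f2 z (f3 z)) ->
  (forall z, al < z < be -> is_derive f3 z (f4 z)) ->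
  (forall z, al <= z <= be -> continuity_pt f0 z) ->
  (forall z, al <= z <= be -> continuity_pt f1 z) ->
  (forall z, al <= z <= be -> continuity_pt f2 z) ->
  (forall z, al <= z <= be -> continuity_pt f3 z) ->
  (forall z, al <= z <= be -> Rabs (f4 z) <= M4) ->
  forall z, al <= z <= be ->
  Rabs (f0 z - (f0 m + f1 m * (z - m) + f2 m / 2 * (z - m) ^ 2 + f3 m / 6 * (z - m) ^ 3))
    <= M4 * Rabs (z - m) ^ 4.
Proof.
  intros Hm HM d0 d1 d2 d3 c0 c1 c2 c3 b4.
  assert (H3 : forall z, al <= z <= be -> Rabs (f3 z - f3 m) <= M4 * Rabs (z - m) ^ 1).
  { apply (abs_le_pow_S_of_derive (fun z => f3 z - f3 m) f4 al be m M4 0); auto.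
    - intros z Hz. replace (f4 z) with (f4 z - 0) by ring.
      apply (is_derive_minus (V := R_NormedModule)); auto. auto_derive; auto.
    - intros z Hz. apply continuity_pt_minus; auto. apply continuity_pt_const. intros ? ?; auto.
    - ring.
    - intros z Hz. simpl. rewrite Rmult_1_r; auto. }
  assert (H2 : forall z, al <= z <= be ->
            Rabs (f2 z - (f2 m + f3 m * (z - m))) <= M4 * Rabs (z - m) ^ 2).
  { apply (abs_le_pow_S_of_derive (fun z => f2 z - (f2 m + f3 m * (z - m)))
             (fun z => f3 z - f3 m) al be m M4 1); auto.
    - intros z Hz. apply (is_derive_minus (V := R_NormedModule)); auto. auto_derive; auto; ring.
    - intros z Hz. apply continuity_pt_minus; auto.
      apply derivable_continuous_pt, ex_derive_Reals_0. auto_derive; auto.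
    - ring. }
  assert (H1 : forall z, al <= z <= be ->
            Rabs (f1 z - (f1 m + f2 m * (z - m) + f3 m / 2 * (z - m) ^ 2))
            <= M4 * Rabs (z - m) ^ 3).
  { apply (abs_le_pow_S_of_derive (fun z => f1 z - (f1 m + f2 m * (z - m) + f3 m / 2 * (z - m) ^ 2))
             (fun z => f2 z - (f2 m + f3 m * (z - m))) al be m M4 2); auto.
    - intros z Hz. apply (is_derive_minus (V := R_NormedModule)); auto. auto_derive; auto; field.
    - intros z Hz. apply continuity_pt_minus; auto.
      apply derivable_continuous_pt, ex_derive_Reals_0. auto_derive; auto.
    - ring. }
  apply (abs_le_pow_S_of_derive
           (fun z => f0 z - (f0 m + f1 m * (z - m) + f2 m / 2 * (z - m) ^ 2 + f3 m / 6 * (z - m) ^ 3))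
           (fun z => f1 z - (f1 m + f2 m * (z - m) + f3 m / 2 * (z - m) ^ 2)) al be m M4 3); auto.
  - intros z Hz. apply (is_derive_minus (V := R_NormedModule)); auto. auto_derive; auto; field.
  - intros z Hz. apply continuity_pt_minus; auto.
    apply derivable_continuous_pt, ex_derive_Reals_0. auto_derive; auto.
  - ring.
Qed.

Definition clamp (al be z : R) : R := Rmax al (Rmin be z).

Lemma clamp_in al be z : al <= be -> al <= clamp al be z <= be.
Proof. intros. unfold clamp, Rmax, Rmin. repeat destruct Rle_dec; lra. Qed.

Lemma clamp_id al be z : al <= z <= be -> clamp al be z = z.
Proof. intros. unfold clamp, Rmax, Rmin. repeat destruct Rle_dec; lra. Qed.

Lemma clamp_lipschitz al be z z' :
  al <= be -> Rabs (clamp al be z' - clamp al be z) <= Rabs (z' - z).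
Proof.
  intros. unfold clamp, Rmax, Rmin.
  repeat destruct Rle_dec; unfold Rabs; repeat destruct Rcase_abs; lra.
Qed.

Definition cont_on_interval (F : R -> R) (al be : R) : Prop :=
  forall z, al <= z <= be -> forall eps, 0 < eps -> exists dl, 0 < dl /\
    forall z', al <= z' <= be -> Rabs (z' - z) < dl -> Rabs (F z' - F z) < eps.

Definition has_derive_on_interval (F F' : R -> R) (al be : R) : Prop :=
  forall z, al <= z <= be -> forall eps, 0 < eps -> exists dl, 0 < dl /\
    forall h, h <> 0 -> Rabs h < dl -> al <= z + h <= be ->
      Rabs ((F (z + h) - F z) / h - F' z) < eps.

(* [clamp] turns a function continuous on [[al, be]] into one continuous on all of [R],
   to which the pointwise continuity and derivative lemmas apply. *)
Lemma continuity_pt_clamp F al be :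
  al <= be -> cont_on_interval F al be ->
  forall z, continuity_pt (fun z => F (clamp al be z)) z.
Proof.
  intros Hab HF z. unfold continuity_pt, continue_in, limit1_in, limit_in. intros eps Heps.
  destruct (HF (clamp al be z) (clamp_in al be z Hab) eps Heps) as [dl [Hdl H]].
  exists dl. split; auto. intros x [_ Hx]. simpl in *. unfold R_dist in *.
  apply H; [apply clamp_in; auto|]. eapply Rle_lt_trans; [apply clamp_lipschitz; auto | auto].
Qed.

Lemma is_derive_clamp F F' al be :
  al <= be -> has_derive_on_interval F F' al be -> forall z, al < z < be ->
  is_derive (fun z => F (clamp al be z)) z (F' (clamp al be z)).
Proof.
  intros Hab HF z Hz. apply is_derive_Reals. rewrite (clamp_id al be z) by lra.
  intros eps Heps. destruct (HF z ltac:(lra) eps Heps) as [dl [Hdl H]].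
  assert (Hd : 0 < Rmin dl (Rmin (z - al) (be - z))) by (repeat apply Rmin_pos; lra).
  exists (mkposreal _ Hd). intros h Hh Hhd. simpl in Hhd.
  assert (Hh1 : Rabs h < dl) by (eapply Rlt_le_trans; [apply Hhd | apply Rmin_l]).
  assert (Hh2 : Rabs h < Rmin (z - al) (be - z)) by (eapply Rlt_le_trans; [apply Hhd | apply Rmin_r]).
  assert (Hzh : al <= z + h <= be).
  { pose proof (Rmin_l (z - al) (be - z)). pose proof (Rmin_r (z - al) (be - z)).
    unfold Rabs in Hh2; destruct Rcase_abs; lra. }
  rewrite (clamp_id al be (z + h)), (clamp_id al be z) by lra. apply H; auto.
Qed.

Definition cubic_taylor_bound (f : R -> R) (al be m B3 B4 : R) : Prop :=
  exists c0 c1 c2 c3, Rabs c3 <= B3 /\ forall z, al <= z <= be ->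
    Rabs (f z - (c0 + c1 * (z - m) + c2 * (z - m) ^ 2 + c3 * (z - m) ^ 3)) <= B4 * (z - m) ^ 4.

Lemma cubic_taylor_bound_sub f al be al' be' m B3 B4 :
  al <= al' -> be' <= be -> cubic_taylor_bound f al be m B3 B4 ->
  cubic_taylor_bound f al' be' m B3 B4.
Proof.
  intros H1 H2 [c0 [c1 [c2 [c3 [Hc3 Hf]]]]].
  exists c0, c1, c2, c3. split; auto. intros z Hz. apply Hf. lra.
Qed.

Lemma cubic_taylor_bound_of_derivs (F0 F1 F2 F3 F4 : R -> R) al be B3 B4 :
  al < be ->
  cont_on_interval F0 al be -> cont_on_interval F1 al be ->
  cont_on_interval F2 al be -> cont_on_interval F3 al be ->
  has_derive_on_interval F0 F1 al be -> has_derive_on_interval F1 F2 al be ->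
  has_derive_on_interval F2 F3 al be -> has_derive_on_interval F3 F4 al be ->
  (forall z, al <= z <= be -> Rabs (F3 z) <= B3 /\ Rabs (F4 z) <= B4) ->
  forall m, al <= m <= be -> cubic_taylor_bound F0 al be m B3 B4.
Proof.
  intros Hab c0 c1 c2 c3 d0 d1 d2 d3 Hb m Hm.
  assert (HB4 : 0 <= B4)
    by (destruct (Hb al ltac:(lra)) as [_ H]; eapply Rle_trans; [apply Rabs_pos | apply H]).
  pose proof (taylor3_remainder_bound (fun z => F0 (clamp al be z)) (fun z => F1 (clamp al be z))
    (fun z => F2 (clamp al be z)) (fun z => F3 (clamp al be z)) (fun z => F4 (clamp al be z))
    al be m B4 Hm HB4) as T.
  exists (F0 m), (F1 m), (F2 m / 2), (F3 m / 6). split.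
  - destruct (Hb m Hm) as [H _]. unfold Rdiv. rewrite Rabs_mult, (Rabs_right (/6)) by lra.
    pose proof (Rabs_pos (F3 m)). lra.
  - intros z Hz.
    specialize (T (is_derive_clamp _ _ al be ltac:(lra) d0) (is_derive_clamp _ _ al be ltac:(lra) d1)
      (is_derive_clamp _ _ al be ltac:(lra) d2) (is_derive_clamp _ _ al be ltac:(lra) d3)
      (fun z _ => continuity_pt_clamp _ al be ltac:(lra) c0 z)
      (fun z _ => continuity_pt_clamp _ al be ltac:(lra) c1 z)
      (fun z _ => continuity_pt_clamp _ al be ltac:(lra) c2 z)
      (fun z _ => continuity_pt_clamp _ al be ltac:(lra) c3 z)).
    specialize (T ltac:(intros w Hw; cbv beta; rewrite clamp_id by auto; apply Hb; auto) z Hz).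
    simpl in T. rewrite !(clamp_id al be m Hm), (clamp_id al be z Hz) in T.
    replace ((z - m) ^ 4) with (Rabs (z - m) ^ 4); [exact T|].
    rewrite RPow_abs. apply Rabs_right.
    replace ((z - m) ^ 4) with (((z - m) ^ 2) ^ 2) by ring. apply Rle_ge, pow2_ge_0.
Qed.

Lemma cubic_taylor_bound_B3_nonneg f al be m B3 B4 : cubic_taylor_bound f al be m B3 B4 -> 0 <= B3.
Proof. intros [c0 [c1 [c2 [c3 [Hc3 _]]]]]. eapply Rle_trans; [apply Rabs_pos | exact Hc3]. Qed.

Lemma cubic_taylor_bound_ext f g al be m B3 B4 : (forall z, al <= z <= be -> f z = g z) ->
  cubic_taylor_bound f al be m B3 B4 -> cubic_taylor_bound g al be m B3 B4.
Proof.
  intros Hfg [c0 [c1 [c2 [c3 [Hc3 Hf]]]]]. exists c0, c1, c2, c3. split; auto.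
  intros z Hz. rewrite <- Hfg by auto. auto.
Qed.

Lemma cubic_taylor_bound_mono f al be m B3 B4 B3' B4' : B3 <= B3' -> B4 <= B4' ->
  cubic_taylor_bound f al be m B3 B4 -> cubic_taylor_bound f al be m B3' B4'.
Proof.
  intros H3 H4 [c0 [c1 [c2 [c3 [Hc3 Hf]]]]]. exists c0, c1, c2, c3. split; [lra|].
  intros z Hz. eapply Rle_trans; [apply Hf; auto|]. apply Rmult_le_compat_r; [|lra].
  replace ((z - m) ^ 4) with (((z - m) ^ 2) ^ 2) by ring. apply pow2_ge_0.
Qed.

(** * Quadratic interpolation on one cell *)

Definition quad_basis0 (P h z : R) : R := 2 * (z - (P + h / 2)) * (z - (P + h)) / (h * h).
Definition quad_basis1 (P h z : R) : R := 4 * (z - P) * ((P + h) - z) / (h * h).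
Definition quad_basis2 (P h z : R) : R := 2 * (z - P) * (z - (P + h / 2)) / (h * h).

Definition quad_interp (P h : R) (g : R -> R) (z : R) : R :=
  quad_basis0 P h z * g P + quad_basis1 P h z * g (P + h / 2) + quad_basis2 P h z * g (P + h).

Lemma quad_basis_abs_le_1 P h z : 0 < h -> P <= z <= P + h ->
  Rabs (quad_basis0 P h z) <= 1 /\ Rabs (quad_basis1 P h z) <= 1 /\ Rabs (quad_basis2 P h z) <= 1.
Proof.
  intros Hh Hz. unfold quad_basis0, quad_basis1, quad_basis2.
  set (s := (z - P) / h).
  assert (Hs : 0 <= s <= 1).
  { unfold s; split; [apply Rdiv_le_0_compat; lra|].
    apply Rmult_le_reg_r with h; auto. unfold Rdiv; rewrite Rmult_assoc, Rinv_l; lra. }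
  replace (2 * (z - (P + h / 2)) * (z - (P + h)) / (h * h)) with (2 * (s - /2) * (s - 1))
    by (unfold s; field; lra).
  replace (4 * (z - P) * (P + h - z) / (h * h)) with (4 * s * (1 - s)) by (unfold s; field; lra).
  replace (2 * (z - P) * (z - (P + h / 2)) / (h * h)) with (2 * s * (s - /2))
    by (unfold s; field; lra).
  assert (0 <= s * (1 - s)) by nra. assert (0 <= (2 * s - 1) ^ 2) by apply pow2_ge_0.
  split; [|split]; apply Rabs_le; split; nra.
Qed.

Lemma Rabs_mult_le a b A B : Rabs a <= A -> Rabs b <= B -> Rabs (a * b) <= A * B.
Proof. intros. rewrite Rabs_mult. apply Rmult_le_compat; auto; apply Rabs_pos. Qed.

Lemma quad_interp_remainder_bound P h (r : R -> R) M4 z : 0 < h -> 0 <= M4 ->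
  (forall y, P <= y <= P + h -> Rabs (r y) <= M4 * (y - (P + h / 2)) ^ 4) ->
  P <= z <= P + h -> Rabs (r z - quad_interp P h r z) <= M4 * h ^ 4.
Proof.
  intros Hh HM Hr Hz.
  assert (Hq : forall y, P <= y <= P + h -> Rabs (r y) <= M4 * h ^ 4 / 16).
  { intros y Hy. eapply Rle_trans; [apply Hr; auto|].
    assert ((y - (P + h / 2)) ^ 4 <= h ^ 4 / 16).
    { replace ((y - (P + h / 2)) ^ 4) with (((y - (P + h / 2)) ^ 2) ^ 2) by ring.
      replace (h ^ 4 / 16) with (((h / 2) ^ 2) ^ 2) by field.
      apply pow_incr. split; [apply pow2_ge_0 | nra]. }
    nra. }
  destruct (quad_basis_abs_le_1 P h z Hh Hz) as [B0 [B1 B2]].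
  pose proof (Rabs_mult_le _ _ _ _ B0 (Hq P ltac:(lra))).
  pose proof (Rabs_mult_le _ _ _ _ B1 (Hq (P + h / 2) ltac:(lra))).
  pose proof (Rabs_mult_le _ _ _ _ B2 (Hq (P + h) ltac:(lra))).
  pose proof (Hq z Hz).
  unfold quad_interp.
  set (A := quad_basis0 P h z * r P) in *. set (B := quad_basis1 P h z * r (P + h / 2)) in *.
  set (C := quad_basis2 P h z * r (P + h)) in *.
  assert (Rabs (r z - (A + B + C)) <= Rabs (r z) + Rabs A + Rabs B + Rabs C).
  { unfold Rminus. eapply Rle_trans; [apply Rabs_triang|]. rewrite Rabs_Ropp.
    pose proof (Rabs_triang (A + B) C). pose proof (Rabs_triang A B). lra. }
  assert (0 <= M4 * h ^ 4) by (apply Rmult_le_pos; [lra | apply pow_le; lra]).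
  lra.
Qed.

(* On a cell with midpoint [Q], the interpolation error of a cubic Taylor polynomial is
   [c3 * ((z - Q)^3 - h^2/4 (z - Q))], an odd function of [z - Q]: at the symmetric points
   [Q + s] and [Q - s] it only contributes through the variation of the weights. *)
Lemma interp_error_symmetric_pair P h (f : R -> R) M3 M4 s wp wm wQ :
  0 < h -> 0 <= M4 -> 0 < s <= h / 2 ->
  cubic_taylor_bound f P (P + h) (P + h / 2) M3 M4 ->
  let Q := P + h / 2 in
  Rabs ((f (Q + s) - quad_interp P h f (Q + s)) * wp + (f (Q - s) - quad_interp P h f (Q - s)) * wm)
  <= M3 * (h ^ 3 / 8) * (Rabs (wp - wQ) + Rabs (wm - wQ)) + M4 * h ^ 4 * (Rabs wp + Rabs wm).
Proof.
  intros Hh HM4 Hs [c0 [c1 [c2 [c3 [Hc3 Hf]]]]] Q.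
  set (r := fun z => f z - (c0 + c1 * (z - Q) + c2 * (z - Q) ^ 2 + c3 * (z - Q) ^ 3)).
  assert (Hr : forall z, P <= z <= P + h -> Rabs (r z - quad_interp P h r z) <= M4 * h ^ 4)
    by (intros; apply quad_interp_remainder_bound; auto).
  set (ep := r (Q + s) - quad_interp P h r (Q + s)).
  set (em := r (Q - s) - quad_interp P h r (Q - s)).
  assert (Hep : Rabs ep <= M4 * h ^ 4) by (apply Hr; unfold Q; lra).
  assert (Hem : Rabs em <= M4 * h ^ 4) by (apply Hr; unfold Q; lra).
  set (om := s ^ 3 - h ^ 2 / 4 * s).
  assert (Dp : f (Q + s) - quad_interp P h f (Q + s) = c3 * om + ep).
  { unfold om, ep, r, quad_interp, quad_basis0, quad_basis1, quad_basis2, Q. field. lra. }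
  assert (Dm : f (Q - s) - quad_interp P h f (Q - s) = - (c3 * om) + em).
  { unfold om, em, r, quad_interp, quad_basis0, quad_basis1, quad_basis2, Q. field. lra. }
  assert (Hom : Rabs om <= h ^ 3 / 8).
  { unfold om. replace (s ^ 3 - h ^ 2 / 4 * s) with (- (s * (h ^ 2 / 4 - s ^ 2))) by ring.
    rewrite Rabs_Ropp. apply Rabs_le.
    assert (H1 : s ^ 2 <= h ^ 2 / 4) by nra.
    assert (0 <= s * (h ^ 2 / 4 - s ^ 2)) by (apply Rmult_le_pos; lra).
    assert (s * (h ^ 2 / 4 - s ^ 2) <= h / 2 * (h ^ 2 / 4 - s ^ 2))
      by (apply Rmult_le_compat_r; lra).
    assert (h / 2 * (h ^ 2 / 4 - s ^ 2) <= h / 2 * (h ^ 2 / 4))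
      by (apply Rmult_le_compat_l; nra).
    replace (h ^ 3 / 8) with (h / 2 * (h ^ 2 / 4)) by field.
    split; nra. }
  rewrite Dp, Dm.
  replace ((c3 * om + ep) * wp + (- (c3 * om) + em) * wm)
    with ((c3 * om) * ((wp - wQ) - (wm - wQ)) + (ep * wp + em * wm)) by ring.
  eapply Rle_trans; [apply Rabs_triang|]. apply Rplus_le_compat.
  - apply Rabs_mult_le; [apply Rabs_mult_le; auto|].
    eapply Rle_trans; [apply Rabs_triang | rewrite Rabs_Ropp; lra].
  - eapply Rle_trans; [apply Rabs_triang|].
    pose proof (Rabs_mult_le _ _ _ _ Hep (Rle_refl (Rabs wp))).
    pose proof (Rabs_mult_le _ _ _ _ Hem (Rle_refl (Rabs wm))). lra.
Qed.

Lemma cell_sum_interp_error_bound P h n (f w : R -> R) M3 M4 W Os :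
  0 < h -> (1 <= n)%nat -> 0 <= M4 ->
  cubic_taylor_bound f P (P + h) (P + h / 2) M3 M4 ->
  let Q := P + h / 2 in
  let dl := h / (2 * INR n) in
  (forall q, (q < n)%nat ->
     Rabs (w (Q + (INR q + /2) * dl)) <= W /\ Rabs (w (Q - (INR q + /2) * dl)) <= W /\
     Rabs (w (Q + (INR q + /2) * dl) - w Q) <= Os /\ Rabs (w (Q - (INR q + /2) * dl) - w Q) <= Os) ->
  Rabs (sumN (fun q =>
          dl * (f (Q + (INR q + /2) * dl) - quad_interp P h f (Q + (INR q + /2) * dl))
             * w (Q + (INR q + /2) * dl)
        + dl * (f (Q - (INR q + /2) * dl) - quad_interp P h f (Q - (INR q + /2) * dl))
             * w (Q - (INR q + /2) * dl)) n)
  <= h * (M4 * h ^ 4 * W + M3 * h ^ 3 * Os).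
Proof.
  intros Hh Hn HM4 Hf Q dl Hw.
  assert (Hn' : 1 <= INR n) by (apply (le_INR 1); auto).
  assert (Hdl : 0 < dl) by (unfold dl; apply Rdiv_lt_0_compat; lra).
  assert (HM3 : 0 <= M3) by (eapply cubic_taylor_bound_B3_nonneg; eauto).
  destruct (Hw 0%nat ltac:(lia)) as [HW0 [_ [HO0 _]]].
  assert (HW : 0 <= W) by (eapply Rle_trans; [apply Rabs_pos | exact HW0]).
  assert (HO : 0 <= Os) by (eapply Rle_trans; [apply Rabs_pos | exact HO0]).
  eapply Rle_trans; [apply sumN_abs|].
  apply Rle_trans with (sumN (fun _ => dl * (M3 * (h ^ 3 / 8) * (2 * Os) + M4 * h ^ 4 * (2 * W))) n).
  - apply sumN_le. intros q Hq.
    destruct (Hw q Hq) as [Wp [Wm [Op Om]]].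
    assert (Hs : 0 < (INR q + /2) * dl <= h / 2).
    { split; [apply Rmult_lt_0_compat; [pose proof (pos_INR q); lra | auto]|].
      assert (INR q + 1 <= INR n) by (rewrite <- S_INR; apply le_INR; lia).
      unfold dl. apply Rmult_le_reg_r with (2 * INR n); [lra|]. field_simplify; [nra | lra]. }
    pose proof (interp_error_symmetric_pair P h f M3 M4 _ (w (Q + (INR q + /2) * dl))
                  (w (Q - (INR q + /2) * dl)) (w Q) Hh HM4 Hs Hf) as Hpair.
    cbv zeta in Hpair.
    rewrite !Rmult_assoc, <- Rmult_plus_distr_l, Rabs_mult, (Rabs_right dl) by lra.
    apply Rmult_le_compat_l; [lra|]. eapply Rle_trans; [exact Hpair|].
    assert (0 <= M3 * (h ^ 3 / 8)) by (apply Rmult_le_pos; [lra | apply Rmult_le_pos; [apply pow_le|]; lra]).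
    assert (0 <= M4 * h ^ 4) by (apply Rmult_le_pos; [lra | apply pow_le; lra]).
    assert (M3 * (h ^ 3 / 8) * (Rabs (w (Q + (INR q + /2) * dl) - w Q)
              + Rabs (w (Q - (INR q + /2) * dl) - w Q)) <= M3 * (h ^ 3 / 8) * (2 * Os))
      by (apply Rmult_le_compat_l; lra).
    assert (M4 * h ^ 4 * (Rabs (w (Q + (INR q + /2) * dl)) + Rabs (w (Q - (INR q + /2) * dl)))
            <= M4 * h ^ 4 * (2 * W)) by (apply Rmult_le_compat_l; lra).
    lra.
  - rewrite sumN_const. unfold dl.
    replace (INR n * (h / (2 * INR n) * (M3 * (h ^ 3 / 8) * (2 * Os) + M4 * h ^ 4 * (2 * W))))
      with (h * (M3 * h ^ 3 * Os / 8 + M4 * h ^ 4 * W)) by (field; lra).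
    apply Rmult_le_compat_l; [lra|].
    assert (0 <= M3 * h ^ 3 * Os) by (apply Rmult_le_pos; [apply Rmult_le_pos; [|apply pow_le]|]; lra).
    lra.
Qed.

Lemma cells_sum_interp_error_bound al h M n (f w : R -> R) M3 M4 W (Os : nat -> R) :
  0 < h -> (1 <= n)%nat -> 0 <= M4 ->
  let dl := h / (2 * INR n) in
  let tg := fun k : nat => al + (INR k + /2) * dl in
  (forall e, (e < M)%nat ->
     cubic_taylor_bound f (al + INR e * h) (al + INR e * h + h) (al + INR e * h + h / 2) M3 M4) ->
  (forall e q, (e < M)%nat -> (q < 2 * n)%nat -> Rabs (w (tg (e * (2 * n) + q)%nat)) <= W) ->
  (forall e q, (e < M)%nat -> (q < 2 * n)%nat ->
     Rabs (w (tg (e * (2 * n) + q)%nat) - w (al + INR e * h + h / 2)) <= Os e) ->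
  Rabs (sumN (fun e => sumN (fun q =>
          dl * (f (tg (e * (2 * n) + q)%nat)
                - quad_interp (al + INR e * h) h f (tg (e * (2 * n) + q)%nat))
             * w (tg (e * (2 * n) + q)%nat)) (2 * n)) M)
  <= sumN (fun e => h * (M4 * h ^ 4 * W + M3 * h ^ 3 * Os e)) M.
Proof.
  intros Hh Hn HM4 dl tg Hf HW HO.
  eapply Rle_trans; [apply sumN_abs|]. apply sumN_le. intros e He.
  set (P := al + INR e * h).
  set (G := fun q => dl * (f (tg (e * (2 * n) + q)%nat) - quad_interp P h f (tg (e * (2 * n) + q)%nat))
                     * w (tg (e * (2 * n) + q)%nat)).
  change (Rabs (sumN G (2 * n)) <= h * (M4 * h ^ 4 * W + M3 * h ^ 3 * Os e)).
  (* Pair the tags [n + q] and [n - 1 - q], symmetric about the midpoint of the cell. *)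
  replace (2 * n)%nat with (n + n)%nat by lia.
  rewrite sumN_split, sumN_rev, Rplus_comm, <- sumN_plus.
  assert (Hn' : 1 <= INR n) by (apply (le_INR 1); auto).
  assert (Htp : forall q, (q < n)%nat ->
            tg (e * (2 * n) + (n + q))%nat = P + h / 2 + (INR q + /2) * dl).
  { intros q Hq. unfold tg, P, dl. rewrite !plus_INR, !mult_INR. simpl (INR 2). field. lra. }
  assert (Htm : forall q, (q < n)%nat ->
            tg (e * (2 * n) + (n - 1 - q))%nat = P + h / 2 - (INR q + /2) * dl).
  { intros q Hq. unfold tg, P, dl.
    rewrite plus_INR, !mult_INR, !minus_INR by lia. simpl (INR 2); simpl (INR 1). field. lra. }
  unfold G. erewrite sumN_ext.
  2:{ intros q Hq. rewrite Htp, Htm by auto. reflexivity. }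
  apply (cell_sum_interp_error_bound P h n f w M3 M4 W (Os e) Hh Hn HM4); [apply Hf; auto|].
  intros q Hq. rewrite <- Htp, <- Htm by auto.
  repeat split; [apply HW | apply HW | apply HO | apply HO]; auto; lia.
Qed.

(** * Weakly singular sums *)

Lemma exp_le_compat a b : a <= b -> exp a <= exp b.
Proof. intros [H|H]; [left; apply exp_increasing; auto | subst; lra]. Qed.

Lemma Rpower_pos x y : 0 < Rpower x y.
Proof. apply exp_pos. Qed.

Lemma ln_le_sub_1 a : 0 < a -> ln a <= a - 1.
Proof. intros Ha. pose proof (exp_ineq1_le (ln a)) as H. rewrite exp_ln in H; lra. Qed.

Lemma Rpower_le_bernoulli z th : 0 < z -> 0 < th < 1 -> Rpower z th <= 1 + th * (z - 1).
Proof.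
  intros Hz Hth. set (w := 1 + th * (z - 1)).
  assert (Hw : 0 < w) by (unfold w; nra).
  (* [ln x <= x - 1] at [z / w] and at [/ w], weighted by [th] and [1 - th]. *)
  assert (H1 : ln (z / w) <= z / w - 1) by (apply ln_le_sub_1, Rdiv_lt_0_compat; auto).
  assert (H2 : ln (/ w) <= / w - 1) by (apply ln_le_sub_1, Rinv_0_lt_compat; auto).
  unfold Rdiv in H1. rewrite ln_mult in H1 by (auto; apply Rinv_0_lt_compat; auto).
  rewrite ln_Rinv in H1, H2 by auto.
  assert (H3 : th * (z * / w - 1) + (1 - th) * (/ w - 1) = 0) by (unfold w; field; fold w; lra).
  assert (H4 : th * ln z <= ln w) by nra.
  unfold Rpower. rewrite <- (exp_ln w) by auto. apply exp_le_compat. lra.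
Qed.

Lemma Rpower_sub_ge x y th : 0 < x -> x <= y -> 0 < th < 1 ->
  th * (y - x) * Rpower y (th - 1) <= Rpower y th - Rpower x th.
Proof.
  intros Hx Hxy Hth.
  assert (Hy : 0 < y) by lra.
  pose proof (Rpower_le_bernoulli (x / y) th (Rdiv_lt_0_compat _ _ Hx Hy) Hth) as B.
  assert (E1 : Rpower (x / y) th * Rpower y th = Rpower x th).
  { rewrite Rpower_mult_distr by (auto; apply Rdiv_lt_0_compat; auto). f_equal. field. lra. }
  assert (E2 : Rpower y (th - 1) = Rpower y th / y).
  { unfold Rminus. rewrite Rpower_plus, Rpower_Ropp, Rpower_1 by auto. reflexivity. }
  rewrite E2. pose proof (Rpower_pos y th) as P.
  assert (Rpower (x / y) th * Rpower y th <= (1 + th * (x / y - 1)) * Rpower y th)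
    by (apply Rmult_le_compat_r; lra).
  rewrite E1 in H. replace ((1 + th * (x / y - 1)) * Rpower y th) with
    (Rpower y th - th * (y - x) * (Rpower y th / y)) in H by (field; lra).
  lra.
Qed.

Lemma Rpower_ge_1 x g : 1 <= x -> 0 <= g -> 1 <= Rpower x g.
Proof.
  intros. replace 1 with (Rpower 1 g) at 1 by (unfold Rpower; rewrite ln_1, Rmult_0_r, exp_0; auto).
  apply Rle_Rpower_l; lra.
Qed.

Definition half_int_pow_sum (g : R) (m : nat) : R := sumN (fun q => / Rpower (INR q + /2) g) m.

(* Compares [(q + 1/2)^-g] with the integral of [t^-g] over [[q - 1/2, q + 1/2]]. *)
Lemma half_int_pow_sum_le g m : 0 < g < 1 -> (1 <= m)%nat ->
  half_int_pow_sum g m <= 2 + / (1 - g) * Rpower (INR m - /2) (1 - g).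
Proof.
  intros Hg Hm. induction m as [|m IH]; [lia|].
  destruct (Nat.eq_dec m 0) as [->|Hm0].
  - unfold half_int_pow_sum. simpl sumN. rewrite Rplus_0_l. simpl INR.
    assert (/ Rpower (0 + / 2) g <= 2).
    { rewrite <- Rpower_Ropp. replace (0 + /2) with (/2) by ring.
      unfold Rpower. rewrite ln_Rinv by lra. replace (- g * - ln 2) with (g * ln 2) by ring.
      rewrite <- (exp_ln 2) at 2 by lra. apply exp_le_compat.
      assert (0 < ln 2) by (rewrite <- ln_1; apply ln_increasing; lra). nra. }
    assert (0 <= / (1 - g) * Rpower (1 - / 2) (1 - g)).
    { apply Rmult_le_pos; [left; apply Rinv_0_lt_compat; lra | left; apply Rpower_pos]. }
    lra.
  - specialize (IH ltac:(lia)). unfold half_int_pow_sum in *. simpl sumN. rewrite S_INR.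
    assert (HmR : 1 <= INR m) by (apply (le_INR 1); lia).
    pose proof (Rpower_sub_ge (INR m - /2) (INR m + /2) (1 - g) ltac:(lra) ltac:(lra) ltac:(lra)) as B.
    replace (INR m + / 2 - (INR m - / 2)) with 1 in B by field.
    replace (1 - g - 1) with (- g) in B by lra. rewrite Rpower_Ropp in B.
    replace (INR m + 1 - /2) with (INR m + /2) by lra.
    assert (/ Rpower (INR m + / 2) g
            <= / (1 - g) * (Rpower (INR m + / 2) (1 - g) - Rpower (INR m - / 2) (1 - g))).
    { apply Rmult_le_reg_l with (1 - g); [lra|]. rewrite <- Rmult_assoc, Rinv_r by lra. lra. }
    lra.
Qed.

Lemma half_int_pow_sum_le_max g m : 0 < g < 1 ->
  half_int_pow_sum g m <= (2 + / (1 - g)) * Rpower (Rmax 1 (INR m)) (1 - g).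
Proof.
  intros Hg.
  assert (H1 : 1 <= Rpower (Rmax 1 (INR m)) (1 - g)) by (apply Rpower_ge_1; [apply Rmax_l | lra]).
  assert (0 < / (1 - g)) by (apply Rinv_0_lt_compat; lra).
  destruct m as [|m]; [unfold half_int_pow_sum; simpl sumN; apply Rmult_le_pos; lra|].
  eapply Rle_trans; [apply half_int_pow_sum_le; auto; lia|].
  assert (Rpower (INR (S m) - /2) (1 - g) <= Rpower (Rmax 1 (INR (S m))) (1 - g)).
  { apply Rle_Rpower_l; [lra|]. split; [rewrite S_INR; pose proof (pos_INR m); lra|].
    eapply Rle_trans; [|apply Rmax_r]. lra. }
  nra.
Qed.

Lemma Rabs_half_int_nonzero J k : INR J - (INR k + /2) <> 0.
Proof.
  intros Hk. assert (INR J = INR k + /2) by lra.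
  destruct (Compare_dec.le_lt_dec J k) as [l|l]; [apply le_INR in l; lra|].
  assert (INR J >= INR (S k)) by (apply Rle_ge, le_INR; lia). rewrite S_INR in H0. lra.
Qed.

(* The discrete analogue of [int_0^(N dl) |t - J dl|^-g dt <= C (N dl)^(1-g)]: the tags on
   each side of the node [J dl] give a sum [half_int_pow_sum]. *)
Lemma singular_midpoint_sum_le g N J dl : 0 < g < 1 -> 0 < dl -> (1 <= N)%nat -> (J <= N)%nat ->
  sumN (fun k => dl * / Rpower (Rabs ((INR J - (INR k + /2)) * dl)) g) N
  <= 2 * (2 + / (1 - g)) * Rpower (INR N * dl) (1 - g).
Proof.
  intros Hg Hdl HN HJ.
  rewrite (sumN_ext _ (fun k => Rpower dl (1 - g) * / Rpower (Rabs (INR J - (INR k + /2))) g)).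
  2:{ intros k _. pose proof (Rabs_half_int_nonzero J k).
      rewrite Rabs_mult, (Rabs_right dl), <- Rpower_mult_distr by (auto; lra || apply Rabs_pos_lt; auto).
      unfold Rminus. rewrite Rpower_plus, Rpower_1, Rpower_Ropp by auto.
      pose proof (Rpower_pos (Rabs (INR J + - (INR k + / 2))) g). pose proof (Rpower_pos dl g).
      field. lra. }
  rewrite sumN_scal.
  replace N with (J + (N - J))%nat at 1 by lia. rewrite sumN_split, sumN_rev.
  rewrite (sumN_ext _ (fun q => / Rpower (INR q + /2) g)).
  2:{ intros q Hq. rewrite !minus_INR by lia. simpl INR.
      f_equal. f_equal. rewrite Rabs_right; [field|]. apply Rle_ge. pose proof (pos_INR q). lra. }
  rewrite (sumN_ext (fun k => / Rpower (Rabs (INR J - (INR (J + k) + / 2))) g)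
                    (fun q => / Rpower (INR q + /2) g)).
  2:{ intros q Hq. rewrite plus_INR. f_equal. f_equal. rewrite Rabs_left; [field|].
      pose proof (pos_INR q). lra. }
  fold (half_int_pow_sum g J) (half_int_pow_sum g (N - J)).
  pose proof (half_int_pow_sum_le_max g J Hg) as S1.
  pose proof (half_int_pow_sum_le_max g (N - J) Hg) as S2.
  set (A := 2 + / (1 - g)).
  assert (HA : 0 < A) by (unfold A; assert (0 < / (1 - g)) by (apply Rinv_0_lt_compat; lra); lra).
  assert (HNR : 1 <= INR N) by (apply (le_INR 1); auto).
  assert (M1 : Rpower (Rmax 1 (INR J)) (1 - g) <= Rpower (INR N) (1 - g)).
  { apply Rle_Rpower_l; [lra|]. split; [eapply Rlt_le_trans; [|apply Rmax_l]; lra|].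
    apply Rmax_lub; auto. apply le_INR; auto. }
  assert (M2 : Rpower (Rmax 1 (INR (N - J))) (1 - g) <= Rpower (INR N) (1 - g)).
  { apply Rle_Rpower_l; [lra|]. split; [eapply Rlt_le_trans; [|apply Rmax_l]; lra|].
    apply Rmax_lub; auto. apply le_INR; lia. }
  rewrite <- (Rpower_mult_distr (INR N) dl) by lra.
  pose proof (Rpower_pos dl (1 - g)).
  assert (A * Rpower (Rmax 1 (INR J)) (1 - g) <= A * Rpower (INR N) (1 - g))
    by (apply Rmult_le_compat_l; lra).
  assert (A * Rpower (Rmax 1 (INR (N - J))) (1 - g) <= A * Rpower (INR N) (1 - g))
    by (apply Rmult_le_compat_l; lra).
  replace (2 * A * (Rpower (INR N) (1 - g) * Rpower dl (1 - g)))
    with (Rpower dl (1 - g) * (2 * A * Rpower (INR N) (1 - g))) by ring.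
  apply Rmult_le_compat_l; unfold A in *; lra.
Qed.

(** * The kernel *)

Definition kernel (g s t : R) : R := / Rpower (s ^ 2 + t ^ 2) (g / 2).

Definition kernel_max (g t : R) : R := / Rpower (Rabs t) g.

Lemma Rpower_sqr_half x g : x <> 0 -> Rpower (x ^ 2) (g / 2) = Rpower (Rabs x) g.
Proof.
  intros Hx. assert (Ha : 0 < Rabs x) by (apply Rabs_pos_lt; auto).
  replace (x ^ 2) with (Rpower (Rabs x) 2).
  - rewrite Rpower_mult. f_equal. field.
  - replace 2 with (INR 2) by (simpl; ring). rewrite Rpower_pow by auto.
    pose proof (Rsqr_abs x) as H. unfold Rsqr in H. simpl. rewrite Rmult_1_r. lra.
Qed.

Lemma kernel_pos g s t : 0 < kernel g s t.
Proof. apply Rinv_0_lt_compat, Rpower_pos. Qed.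

Lemma kernel_le_sqr g s1 s2 t : 0 < g -> t <> 0 -> s1 ^ 2 <= s2 ^ 2 -> kernel g s2 t <= kernel g s1 t.
Proof.
  intros Hg Ht Hs. unfold kernel.
  assert (0 < t ^ 2) by (apply pow2_gt_0; auto).
  assert (0 <= s1 ^ 2) by apply pow2_ge_0.
  apply Rinv_le_contravar; [apply Rpower_pos|]. apply Rle_Rpower_l; lra.
Qed.

Lemma kernel_le_max g s t : 0 < g -> t <> 0 -> kernel g s t <= kernel_max g t.
Proof.
  intros Hg Ht. unfold kernel_max. rewrite <- Rpower_sqr_half by auto.
  replace (t ^ 2) with (0 ^ 2 + t ^ 2) by ring. apply kernel_le_sqr; auto. simpl. nra.
Qed.

Lemma kernel_sym g s t : kernel g s t = kernel g t s.
Proof. unfold kernel. rewrite Rplus_comm. reflexivity. Qed.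

(* [x |-> kernel g (xc - x) t] increases up to [xc] and decreases afterwards, so its total
   variation along any grid containing [xc] is at most twice its maximum. *)
Section KernelVariation.
Variables (g t al hh xc : R) (I : nat).
Hypothesis Hg : 0 < g.
Hypothesis Ht : t <> 0.
Hypothesis Hh : 0 < hh.
Let z k := al + INR k * hh.
Hypothesis Hxc : xc = z I.
Let v x := kernel g (xc - x) t.

Lemma grid_le m n : (m <= n)%nat -> z m <= z n.
Proof. intros. unfold z. apply Rplus_le_compat_l, Rmult_le_compat_r; [lra | apply le_INR; auto]. Qed.

Lemma kernel_incr x y : x <= y <= xc -> v x <= v y.
Proof. intros. apply kernel_le_sqr; auto. nra. Qed.

Lemma kernel_decr x y : xc <= x <= y -> v y <= v x.
Proof. intros. apply kernel_le_sqr; auto. nra. Qed.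

Lemma kernel_variation_le Nn : (I <= Nn)%nat ->
  sumN (fun k => Rabs (v (z k) - v (z (S k)))) Nn <= 2 * kernel_max g t.
Proof.
  intros HI. replace Nn with (I + (Nn - I))%nat by lia. rewrite sumN_split.
  rewrite (sumN_ext _ (fun k => v (z (S k)) - v (z k))).
  2:{ intros k Hk. rewrite Rabs_left1; [ring|].
      enough (v (z k) <= v (z (S k))) by lra.
      apply kernel_incr. rewrite Hxc. split; apply grid_le; lia. }
  rewrite (sumN_ext (fun k => Rabs (v (z (I + k)%nat) - v (z (S (I + k)))))
                    (fun k => (-1) * (v (z (I + S k)%nat) - v (z (I + k)%nat)))).
  2:{ intros k Hk. rewrite Rabs_right, Nat.add_succ_r; [ring|].
      enough (v (z (S (I + k))) <= v (z (I + k)%nat)) by lra.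
      apply kernel_decr. rewrite Hxc. split; apply grid_le; lia. }
  rewrite sumN_scal, (sumN_telescope (fun k => v (z k)) I),
    (sumN_telescope (fun k => v (z (I + k)%nat))), Nat.add_0_r.
  assert (v (z I) <= kernel_max g t) by (apply kernel_le_max; auto).
  pose proof (kernel_pos g (xc - z O) t). pose proof (kernel_pos g (xc - z (I + (Nn - I))) t).
  unfold v in *. lra.
Qed.

Definition kernel_osc e :=
  Rabs (v (z (2 * e)%nat) - v (z (S (2 * e)))) + Rabs (v (z (S (2 * e))) - v (z (S (S (2 * e))))).

Lemma kernel_osc_bound e x :
  z (2 * e)%nat <= x <= z (S (S (2 * e))) -> Rabs (v x - v (z (S (2 * e)))) <= kernel_osc e.
Proof.
  intros Hx. unfold kernel_osc.
  assert (Hpiece : forall k y, z k <= y <= z (S k) ->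
            Rabs (v y - v (z (S k))) <= Rabs (v (z k) - v (z (S k))) /\
            Rabs (v y - v (z k)) <= Rabs (v (z k) - v (z (S k)))).
  { intros k y Hy. destruct (Compare_dec.le_lt_dec I k) as [Hk|Hk].
    - assert (xc <= z k) by (rewrite Hxc; apply grid_le; auto).
      assert (v y <= v (z k)) by (apply kernel_decr; lra).
      assert (v (z (S k)) <= v y) by (apply kernel_decr; lra).
      split; unfold Rabs; repeat destruct Rcase_abs; lra.
    - assert (z (S k) <= xc) by (rewrite Hxc; apply grid_le; lia).
      assert (v (z k) <= v y) by (apply kernel_incr; lra).
      assert (v y <= v (z (S k))) by (apply kernel_incr; lra).
      split; unfold Rabs; repeat destruct Rcase_abs; lra. }
  pose proof (Rabs_pos (v (z (2 * e)%nat) - v (z (S (2 * e))))).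
  pose proof (Rabs_pos (v (z (S (2 * e))) - v (z (S (S (2 * e)))))).
  destruct (Rle_dec x (z (S (2 * e)))).
  - destruct (Hpiece (2 * e)%nat x ltac:(lra)) as [A _]. lra.
  - destruct (Hpiece (S (2 * e)) x ltac:(lra)) as [_ A]. lra.
Qed.

Lemma kernel_osc_sum_le M : (I <= 2 * M)%nat -> sumN kernel_osc M <= 2 * kernel_max g t.
Proof.
  intros HI. eapply Rle_trans; [|apply (kernel_variation_le (M * 2)); lia].
  rewrite sumN_block. apply Req_le, sumN_ext. intros e _. unfold kernel_osc. simpl sumN.
  replace (e * 2 + 0)%nat with (2 * e)%nat by lia. replace (e * 2 + 1)%nat with (S (2 * e)) by lia.
  ring.
Qed.

End KernelVariation.

(** * The piecewise quadratic interpolant *)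

Ltac destruct_eqb :=
  repeat match goal with |- context [Nat.eqb ?m ?n] => destruct (Nat.eqb_spec m n) end.

Lemma phi_int_on_cell a b h k e x : 0 < h -> a <= x <= b ->
  a + INR e * h < x < a + INR e * h + h ->
  phi_int a b h k x = if Nat.eqb k e then quad_basis0 (a + INR e * h) h x
                      else if Nat.eqb k (S e) then quad_basis2 (a + INR e * h) h x else 0.
Proof.
  intros Hh Hab Hx. unfold phi_int, node.
  destruct (Rle_dec a x); [|lra]. destruct (Rle_dec x b); [|lra].
  destruct (Compare_dec.lt_eq_lt_dec k e) as [[Hk|Hk]|Hk].
  - assert (INR k + 1 <= INR e) by (rewrite <- S_INR; apply le_INR; lia).
    destruct_eqb; try lia.
    destruct (Rle_dec _ x); auto. destruct (Rle_dec x _); [nra|]. destruct (Rle_dec x _); auto. nra.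
  - subst. destruct_eqb; try lia.
    destruct (Rle_dec _ x); [|nra]. destruct (Rle_dec x _); [nra|]. destruct (Rle_dec x _); [|nra].
    unfold quad_basis0. field. lra.
  - destruct (Nat.eq_dec k (S e)) as [->|Hk2].
    + destruct_eqb; try lia. rewrite S_INR.
      destruct (Rle_dec _ x); [|nra]. destruct (Rle_dec x _); [|nra].
      unfold quad_basis2. field. lra.
    + assert (INR e + 2 <= INR k)
        by (replace 2 with (INR 2) by (simpl; ring); rewrite <- plus_INR; apply le_INR; lia).
      destruct_eqb; try lia. destruct (Rle_dec _ x); auto. nra.
Qed.

Lemma phi_half_on_cell a h k e x : 0 < h ->
  a + INR e * h < x < a + INR e * h + h ->
  phi_half a h k x = if Nat.eqb k (S e) then quad_basis1 (a + INR e * h) h x else 0.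
Proof.
  intros Hh Hx. unfold phi_half, node.
  destruct (Nat.eq_dec k (S e)) as [->|Hk].
  - destruct_eqb; try lia. rewrite S_INR.
    destruct (Rle_dec _ x); [|nra]. destruct (Rle_dec x _); [|nra].
    unfold quad_basis1. field. lra.
  - destruct_eqb; try lia. destruct (Compare_dec.le_lt_dec k e) as [Hk'|Hk'].
    + assert (INR k <= INR e) by (apply le_INR; lia).
      destruct (Rle_dec _ x); auto. destruct (Rle_dec x _); auto. nra.
    + assert (INR e + 2 <= INR k)
        by (replace 2 with (INR 2) by (simpl; ring); rewrite <- plus_INR; apply le_INR; lia).
      destruct (Rle_dec _ x); auto. nra.
Qed.

Lemma phiQ_on_cell a b M l e x : a < b -> (e < M)%nat ->
  let h := (b - a) / INR M in
  a + INR e * h < x < a + INR e * h + h ->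
  phiQ a b M l x = if Nat.eqb l (2 * e) then quad_basis0 (a + INR e * h) h x
                   else if Nat.eqb l (S (2 * e)) then quad_basis1 (a + INR e * h) h x
                   else if Nat.eqb l (S (S (2 * e))) then quad_basis2 (a + INR e * h) h x else 0.
Proof.
  intros Hab He h Hx.
  assert (HM : 0 < INR M) by (apply lt_0_INR; lia).
  assert (Hh : 0 < h) by (unfold h; apply Rdiv_lt_0_compat; lra).
  assert (HeM : INR e + 1 <= INR M) by (rewrite <- S_INR; apply le_INR; lia).
  assert (Hb : a + INR M * h = b) by (unfold h; field; lra).
  assert (Hxab : a <= x <= b) by (split; [pose proof (pos_INR e); nra | nra]).
  unfold phiQ. fold h.
  destruct (Nat.Even_or_Odd l) as [[k ->]|[k ->]].
  - replace (Nat.even (2 * k)) with true by (symmetry; apply Nat.even_spec; exists k; lia).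
    rewrite Nat.div2_double, (phi_int_on_cell a b h k e x Hh Hxab Hx).
    destruct_eqb; try reflexivity; lia.
  - replace (Nat.even (2 * k + 1)) with false
      by (symmetry; apply Bool.not_true_iff_false; intros H; apply Nat.even_spec in H;
          destruct H; lia).
    replace (Nat.div2 (S (2 * k + 1))) with (S k)
      by (replace (S (2 * k + 1)) with (2 * S k)%nat by lia; rewrite Nat.div2_double; reflexivity).
    rewrite (phi_half_on_cell a h (S k) e x Hh Hx).
    destruct_eqb; try reflexivity; lia.
Qed.

Lemma phiQ_sum_on_cell a b M e x (G : nat -> R) : a < b -> (e < M)%nat ->
  let h := (b - a) / INR M in
  a + INR e * h < x < a + INR e * h + h ->
  sum_f_R0 (fun l => phiQ a b M l x * G l) (2 * M) =
  quad_basis0 (a + INR e * h) h x * G (2 * e)%nat + quad_basis1 (a + INR e * h) h x * G (S (2 * e))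
  + quad_basis2 (a + INR e * h) h x * G (S (S (2 * e))).
Proof.
  intros Hab He h Hx. rewrite sum_f_R0_sumN.
  rewrite (sumN_ext _ (fun l =>
     (if Nat.eqb l (2 * e) then quad_basis0 (a + INR e * h) h x * G (2 * e)%nat else 0)
     + (if Nat.eqb l (S (2 * e)) then quad_basis1 (a + INR e * h) h x * G (S (2 * e)) else 0)
     + (if Nat.eqb l (S (S (2 * e))) then quad_basis2 (a + INR e * h) h x * G (S (S (2 * e))) else 0))).
  2:{ intros l _. rewrite (phiQ_on_cell a b M l e x Hab He Hx). fold h.
      destruct_eqb; subst; try ring; lia. }
  rewrite !sumN_plus, !sumN_delta by lia. reflexivity.
Qed.

Lemma node_even a h e : node a h (INR (2 * e) / 2) = a + INR e * h.
Proof. unfold node. rewrite mult_INR. simpl (INR 2). field. Qed.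

Lemma node_odd a h e : node a h (INR (S (2 * e)) / 2) = a + INR e * h + h / 2.
Proof. unfold node. rewrite S_INR, mult_INR. simpl (INR 2). field. Qed.

Lemma node_even_succ a h e : node a h (INR (S (S (2 * e))) / 2) = a + INR e * h + h.
Proof. unfold node. rewrite !S_INR, mult_INR. simpl (INR 2). field. Qed.

Definition interp1 (a b : R) (M : nat) (f : R -> R) (x : R) : R :=
  sum_f_R0 (fun l => phiQ a b M l x * f (node a ((b - a) / INR M) (INR l / 2))) (2 * M).

Lemma uQ_eq_interp1 u a b c d Mx My x y :
  uQ u a b c d Mx My x y = interp1 a b Mx (fun X => interp1 c d My (u X) y) x.
Proof.
  unfold uQ, interp1. apply sum_eq. intros l _.
  rewrite !sum_f_R0_sumN, <- sumN_scal. apply sumN_ext. intros r _. ring.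
Qed.

Lemma interp1_on_cell a b M f e x : a < b -> (e < M)%nat ->
  let h := (b - a) / INR M in
  a + INR e * h < x < a + INR e * h + h ->
  interp1 a b M f x = quad_interp (a + INR e * h) h f x.
Proof.
  intros Hab He h Hx. unfold interp1.
  rewrite (phiQ_sum_on_cell a b M e x _ Hab He Hx).
  fold h. rewrite node_even, node_odd, node_even_succ. reflexivity.
Qed.

Lemma interp1_abs_le a b M f e x B : a < b -> (e < M)%nat ->
  let h := (b - a) / INR M in
  a + INR e * h < x < a + INR e * h + h ->
  (forall X, a <= X <= b -> Rabs (f X) <= B) ->
  Rabs (interp1 a b M f x) <= 3 * B.
Proof.
  intros Hab He h Hx Hf.
  assert (HM : 0 < INR M) by (apply lt_0_INR; lia).
  assert (Hh : 0 < h) by (unfold h; apply Rdiv_lt_0_compat; lra).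
  assert (HeM : INR e + 1 <= INR M) by (rewrite <- S_INR; apply le_INR; lia).
  assert (Hb : a + INR M * h = b) by (unfold h; field; lra).
  assert (He0 : 0 <= INR e * h) by (apply Rmult_le_pos; [apply pos_INR | lra]).
  assert ((INR e + 1) * h <= INR M * h) by (apply Rmult_le_compat_r; lra).
  rewrite (interp1_on_cell a b M f e x Hab He Hx). fold h. unfold quad_interp.
  destruct (quad_basis_abs_le_1 (a + INR e * h) h x Hh ltac:(lra)) as [H0 [H1 H2]].
  pose proof (Rabs_mult_le _ _ _ _ H0 (Hf (a + INR e * h) ltac:(lra))).
  pose proof (Rabs_mult_le _ _ _ _ H1 (Hf (a + INR e * h + h / 2) ltac:(lra))).
  pose proof (Rabs_mult_le _ _ _ _ H2 (Hf (a + INR e * h + h) ltac:(lra))).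
  eapply Rle_trans; [apply Rabs_triang|].
  eapply Rle_trans; [apply Rplus_le_compat_r, Rabs_triang|]. lra.
Qed.

Lemma interp1_minus a b M f g x :
  interp1 a b M (fun X => f X - g X) x = interp1 a b M f x - interp1 a b M g x.
Proof. unfold interp1. rewrite !sum_f_R0_sumN, <- sumN_minus. apply sumN_ext; intros; ring. Qed.

Lemma uQ_error_split u a b c d Mx My x y :
  u x y - uQ u a b c d Mx My x y =
  (u x y - interp1 a b Mx (fun X => u X y) x)
  + interp1 a b Mx (fun X => u X y - interp1 c d My (u X) y) x.
Proof. rewrite uQ_eq_interp1, interp1_minus. ring. Qed.

Lemma midpoint_sum_interp1 (F : R -> R -> R) (w : R -> R) a b M c d N x :
  midpoint_sum (fun y => interp1 a b M (fun X => F X y) x * w y) c d N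
  = interp1 a b M (fun X => midpoint_sum (fun y => F X y * w y) c d N) x.
Proof.
  unfold midpoint_sum, interp1. rewrite sum_f_R0_sumN.
  rewrite (sumN_ext _ (fun k => sumN (fun l => (d - c) / INR N *
     (phiQ a b M l x * F (node a ((b - a) / INR M) (INR l / 2)) (c + (INR k + /2) * ((d - c) / INR N))
      * w (c + (INR k + /2) * ((d - c) / INR N)))) (S (2 * M)))).
  2:{ intros k _. rewrite sum_f_R0_sumN, (Rmult_comm _ (w _)), <- sumN_scal, <- sumN_scal.
      apply sumN_ext; intros; ring. }
  rewrite sumN_swap. apply sumN_ext. intros l _. rewrite <- sumN_scal. apply sumN_ext; intros; ring.
Qed.

(** * Regularity on the rectangle *)

(* Uniform continuity with tolerance [2], from Coquelicot's [compactness_value] applied to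
   half the pointwise moduli of continuity for tolerance [1]. *)
Lemma cont_on_rect_unif g a b c d : cont_on_rect g a b c d ->
  exists d0, 0 < d0 /\ forall x y x' y', in_rect a b c d x y -> in_rect a b c d x' y' ->
    Rabs (x - x') < d0 -> Rabs (y - y') < d0 -> Rabs (g x y - g x' y') <= 2.
Proof.
  intros Hc.
  assert (Hch : forall x y, exists dl : R, 0 < dl /\ (in_rect a b c d x y ->
      forall x' y', in_rect a b c d x' y' ->
      Rabs (x' - x) < dl -> Rabs (y' - y) < dl -> Rabs (g x' y' - g x y) < 1)).
  { intros x y. destruct (excluded_middle_informative (in_rect a b c d x y)) as [H|H].
    - destruct (Hc x y H 1 Rlt_0_1) as [dl [Hdl Hp]]. exists dl. split; auto.
    - exists 1. split; [lra | intros; contradiction]. }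
  set (D := fun x y => epsilon (inhabits 1) (fun dl => 0 < dl /\ (in_rect a b c d x y ->
      forall x' y', in_rect a b c d x' y' ->
      Rabs (x' - x) < dl -> Rabs (y' - y) < dl -> Rabs (g x' y' - g x y) < 1))).
  assert (HD : forall x y, 0 < D x y /\ (in_rect a b c d x y ->
      forall x' y', in_rect a b c d x' y' ->
      Rabs (x' - x) < D x y -> Rabs (y' - y) < D x y -> Rabs (g x' y' - g x y) < 1))
    by (intros x y; apply epsilon_spec, Hch).
  set (delta := fun p : Compactness.Tn 2 R => let '(x, (y, _)) := p in
         mkposreal (D x y / 2) (Rdiv_lt_0_compat _ _ (proj1 (HD x y)) Rlt_0_2)).
  destruct (compactness_value 2 (a, (c, tt)) (b, (d, tt)) delta) as [d0 Hd0].
  exists d0. split; [apply cond_pos|].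
  intros x y x' y' Hxy Hxy' Hx Hy.
  apply Rnot_lt_le. intros Hlt.
  apply (Hd0 (x, (y, tt))); [simpl; unfold in_rect in Hxy; tauto|].
  intros [[tx [ty []]] [Ht [Hcl Hdd]]].
  simpl in Ht, Hcl, Hdd. destruct Hcl as [Hcx [Hcy _]].
  assert (Htr : in_rect a b c d tx ty) by (unfold in_rect; tauto).
  destruct (HD tx ty) as [HDp HDq].
  assert (A1 : Rabs (g x y - g tx ty) < 1) by (apply HDq; auto; lra).
  assert (A2 : Rabs (g x' y' - g tx ty) < 1).
  { apply HDq; auto.
    - replace (x' - tx) with ((x' - x) + (x - tx)) by ring.
      eapply Rle_lt_trans; [apply Rabs_triang|]. rewrite Rabs_minus_sym in Hx. lra.
    - replace (y' - ty) with ((y' - y) + (y - ty)) by ring.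
      eapply Rle_lt_trans; [apply Rabs_triang|]. rewrite Rabs_minus_sym in Hy. lra. }
  assert (Rabs (g x y - g x' y') <= Rabs (g x y - g tx ty) + Rabs (g x' y' - g tx ty)).
  { replace (g x y - g x' y') with ((g x y - g tx ty) - (g x' y' - g tx ty)) by ring.
    unfold Rminus at 1. eapply Rle_trans; [apply Rabs_triang|]. rewrite Rabs_Ropp. lra. }
  lra.
Qed.

(* Walk from [(a, c)] to [(x, y)] in [N] steps shorter than the modulus of uniform
   continuity; each step changes [g] by at most [2]. *)
Lemma cont_on_rect_bounded g a b c d : a <= b -> c <= d -> cont_on_rect g a b c d ->
  exists B, forall x y, in_rect a b c d x y -> Rabs (g x y) <= B.
Proof.
  intros Hab Hcd Hc. destruct (cont_on_rect_unif g a b c d Hc) as [d0 [Hd0 Hu]].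
  destruct (INR_archimed d0 (b - a + d - c) Hd0) as [N HNd].
  assert (HNp : 0 < INR N) by (destruct (Rle_lt_dec (INR N) 0); [nra | auto]).
  exists (Rabs (g a c) + 2 * INR N).
  intros x y [Hx Hy].
  set (sx := (x - a) / INR N). set (sy := (y - c) / INR N).
  assert (Ex : INR N * sx = x - a) by (unfold sx; field; lra).
  assert (Ey : INR N * sy = y - c) by (unfold sy; field; lra).
  assert (Hsx : 0 <= sx < d0) by (split; nra).
  assert (Hsy : 0 <= sy < d0) by (split; nra).
  set (p := fun k : nat => a + INR k * sx).
  set (q := fun k : nat => c + INR k * sy).
  assert (Hin : forall k, (k <= N)%nat -> in_rect a b c d (p k) (q k)).
  { intros k Hk. assert (INR k <= INR N) by (apply le_INR; auto). pose proof (pos_INR k).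
    unfold in_rect, p, q. split; split; nra. }
  assert (Hwalk : forall k, (k <= N)%nat -> Rabs (g (p k) (q k) - g a c) <= 2 * INR k).
  { induction k as [|k IH]; intros Hk.
    - unfold p, q. simpl. rewrite !Rmult_0_l, !Rplus_0_r, Rminus_diag, Rabs_R0. lra.
    - specialize (IH ltac:(lia)).
      assert (Rabs (g (p (S k)) (q (S k)) - g (p k) (q k)) <= 2).
      { apply Hu; [apply Hin; lia | apply Hin; lia | |];
          [unfold p | unfold q]; rewrite S_INR;
          [replace (a + (INR k + 1) * sx - (a + INR k * sx)) with sx by ring
          |replace (c + (INR k + 1) * sy - (c + INR k * sy)) with sy by ring];
          rewrite Rabs_right; lra. }
      rewrite S_INR.
      replace (g (p (S k)) (q (S k)) - g a c)
        with ((g (p (S k)) (q (S k)) - g (p k) (q k)) + (g (p k) (q k) - g a c)) by ring.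
      eapply Rle_trans; [apply Rabs_triang | lra]. }
  specialize (Hwalk N (le_n N)).
  replace (p N) with x in Hwalk by (unfold p; lra). replace (q N) with y in Hwalk by (unfold q; lra).
  replace (g x y) with ((g x y - g a c) + g a c) by ring.
  eapply Rle_trans; [apply Rabs_triang | lra].
Qed.

Lemma cont_on_rect_x G a b c d y0 :
  cont_on_rect G a b c d -> c <= y0 <= d -> cont_on_interval (fun z => G z y0) a b.
Proof.
  intros HG Hy z Hz eps Heps. destruct (HG z y0 (conj Hz Hy) eps Heps) as [dl [Hdl H]].
  exists dl. split; auto. intros z' Hz' Hd. apply H; auto; [split; auto|].
  rewrite Rminus_diag, Rabs_R0; auto.
Qed.

Lemma cont_on_rect_y G a b c d x0 :
  cont_on_rect G a b c d -> a <= x0 <= b -> cont_on_interval (fun z => G x0 z) c d.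
Proof.
  intros HG Hx z Hz eps Heps. destruct (HG x0 z (conj Hx Hz) eps Heps) as [dl [Hdl H]].
  exists dl. split; auto. intros z' Hz' Hd. apply H; auto; [split; auto|].
  rewrite Rminus_diag, Rabs_R0; auto.
Qed.

Lemma has_dx_on_rect_x G G' a b c d y0 : has_dx_on_rect G G' a b c d -> c <= y0 <= d ->
  has_derive_on_interval (fun z => G z y0) (fun z => G' z y0) a b.
Proof.
  intros HG Hy z Hz eps Heps. destruct (HG z y0 (conj Hz Hy) eps Heps) as [dl [Hdl H]].
  exists dl. split; auto. intros h Hh Hhd Hzh. apply H; auto. split; auto.
Qed.

Lemma has_dy_on_rect_y G G' a b c d x0 : has_dy_on_rect G G' a b c d -> a <= x0 <= b ->
  has_derive_on_interval (fun z => G x0 z) (fun z => G' x0 z) c d.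
Proof.
  intros HG Hx z Hz eps Heps. destruct (HG x0 z (conj Hx Hz) eps Heps) as [dl [Hdl H]].
  exists dl. split; auto. intros h Hh Hhd Hzh. apply H; auto. split; auto.
Qed.

Lemma Ck_rect_cont_on_rect k u a b c d : Ck_rect k u a b c d -> cont_on_rect u a b c d.
Proof.
  intros [D [HD0 [HDc _]]] x y Hxy eps Heps.
  destruct (HDc 0%nat 0%nat ltac:(lia) x y Hxy eps Heps) as [dl [Hdl H]].
  exists dl. split; auto. intros x' y' Hxy' Hx Hy. rewrite <- !HD0 by auto. auto.
Qed.

Lemma Ck_rect_cubic_taylor k u a b c d : (4 <= k)%nat -> a < b -> c < d -> Ck_rect k u a b c d ->
  exists B3 B4, 0 <= B4 /\
    (forall y0 m, c <= y0 <= d -> a <= m <= b -> cubic_taylor_bound (fun z => u z y0) a b m B3 B4) /\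
    (forall x0 m, a <= x0 <= b -> c <= m <= d -> cubic_taylor_bound (fun z => u x0 z) c d m B3 B4).
Proof.
  intros Hk Hab Hcd [D [HD0 [HDc HDd]]].
  assert (Hbnd : forall p q, (p + q <= k)%nat ->
            exists B, forall x y, in_rect a b c d x y -> Rabs (D p q x y) <= B)
    by (intros p q Hpq; apply cont_on_rect_bounded; auto; lra).
  destruct (Hbnd 3%nat 0%nat ltac:(lia)) as [B30 H30].
  destruct (Hbnd 4%nat 0%nat ltac:(lia)) as [B40 H40].
  destruct (Hbnd 0%nat 3%nat ltac:(lia)) as [B03 H03].
  destruct (Hbnd 0%nat 4%nat ltac:(lia)) as [B04 H04].
  exists (Rmax B30 B03), (Rmax B40 B04). split; [|split].
  - eapply Rle_trans; [apply Rabs_pos|]. eapply Rle_trans; [|apply Rmax_l].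
    apply (H40 a c). unfold in_rect; lra.
  - intros y0 m Hy Hm.
    apply cubic_taylor_bound_mono with B30 B40; [apply Rmax_l | apply Rmax_l|].
    apply cubic_taylor_bound_ext with (fun z => D 0%nat 0%nat z y0);
      [intros z Hz; apply HD0; split; auto|].
    apply cubic_taylor_bound_of_derivs with (fun z => D 1%nat 0%nat z y0)
      (fun z => D 2%nat 0%nat z y0) (fun z => D 3%nat 0%nat z y0) (fun z => D 4%nat 0%nat z y0);
      auto;
      try (apply cont_on_rect_x with c d; auto; apply HDc; lia);
      try (apply has_dx_on_rect_x with c d; auto; apply HDd; lia).
    intros z Hz. split; [apply H30 | apply H40]; split; auto.
  - intros x0 m Hx Hm.
    apply cubic_taylor_bound_mono with B03 B04; [apply Rmax_r | apply Rmax_r|].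
    apply cubic_taylor_bound_ext with (fun z => D 0%nat 0%nat x0 z);
      [intros z Hz; apply HD0; split; auto|].
    apply cubic_taylor_bound_of_derivs with (fun z => D 0%nat 1%nat x0 z)
      (fun z => D 0%nat 2%nat x0 z) (fun z => D 0%nat 3%nat x0 z) (fun z => D 0%nat 4%nat x0 z);
      auto;
      try (apply cont_on_rect_y with a b; auto; apply HDc; lia);
      try (apply has_dy_on_rect_y with a b; auto; apply HDd; lia).
    intros z Hz. split; [apply H03 | apply H04]; split; auto.
Qed.

Lemma ex_RInt_cellwise_continuous (F : R -> R) a b M : a < b -> (1 <= M)%nat ->
  let h := (b - a) / INR M in
  (forall e, (e < M)%nat -> exists G : R -> R, (forall z, continuity_pt G z) /\
      forall x, a + INR e * h < x < a + INR e * h + h -> F x = G x) ->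
  ex_RInt F a b.
Proof.
  intros Hab HM h HG.
  assert (HMr : 0 < INR M) by (apply lt_0_INR; lia).
  assert (Hh : 0 < h) by (unfold h; apply Rdiv_lt_0_compat; lra).
  assert (Hk : forall k, (k <= M)%nat -> ex_RInt F a (a + INR k * h)).
  { induction k as [|k IH]; intros Hk.
    - simpl. rewrite Rmult_0_l, Rplus_0_r. apply ex_RInt_point.
    - apply ex_RInt_Chasles with (a + INR k * h); [apply IH; lia|].
      destruct (HG k ltac:(lia)) as [G [HGc HGe]].
      apply ex_RInt_ext with G.
      { intros x Hx. rewrite Rmin_left, Rmax_right in Hx by (rewrite S_INR; lra).
        symmetry. apply HGe. rewrite S_INR in Hx. lra. }
      apply (@ex_RInt_continuous R_CompleteNormedModule). intros z _.
      apply continuity_pt_filterlim, HGc. }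
  replace b with (a + INR M * h) by (unfold h; field; lra). apply Hk; auto.
Qed.

Lemma continuity_pt_Rpower_dist xi t g : t <> 0 ->
  forall x, continuity_pt (fun x => Rpower ((xi - x) ^ 2 + t ^ 2) (g / 2)) x.
Proof.
  intros Ht x. apply derivable_continuous_pt, ex_derive_Reals_0. auto_derive.
  eexists. apply is_derive_Reals, derivable_pt_lim_power.
  assert (0 < t * t) by (apply Rsqr_pos_lt; auto).
  assert (0 <= (xi + - x) * (xi + - x)) by apply Rle_0_sqr. nra.
Qed.

Lemma ex_RInt_weighted_interp_error u a b c d Mx My g xi yj t :
  a < b -> c <= t <= d -> t <> yj -> (1 <= Mx)%nat -> cont_on_rect u a b c d ->
  ex_RInt (fun x => (u x t - uQ u a b c d Mx My x t) / Rpower ((xi - x) ^ 2 + (yj - t) ^ 2) (g / 2))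
    a b.
Proof.
  intros Hab Ht Htj HMx Hu.
  apply ex_RInt_cellwise_continuous with Mx; auto.
  intros e He. set (h := (b - a) / INR Mx). set (P := a + INR e * h).
  set (V := fun X => interp1 c d My (u X) t).
  exists (fun x => (u (clamp a b x) t - quad_interp P h V x) / Rpower ((xi - x) ^ 2 + (yj - t) ^ 2) (g / 2)).
  assert (Hh : 0 < h) by (unfold h; apply Rdiv_lt_0_compat; [lra | apply lt_0_INR; lia]).
  split.
  - intros z. apply continuity_pt_div.
    + apply continuity_pt_minus.
      * apply (continuity_pt_clamp (fun z => u z t) a b); [lra|]. apply cont_on_rect_x with c d; auto.
      * apply derivable_continuous_pt, ex_derive_Reals_0.
        unfold quad_interp, quad_basis0, quad_basis1, quad_basis2. auto_derive. nra.
    + apply continuity_pt_Rpower_dist. lra.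
    + apply Rgt_not_eq, Rpower_pos.
  - intros x Hx. rewrite uQ_eq_interp1, (interp1_on_cell a b Mx _ e x Hab He Hx).
    assert (HeM : INR e + 1 <= INR Mx) by (rewrite <- S_INR; apply le_INR; lia).
    assert (Hb : a + INR Mx * h = b) by (unfold h; field; apply Rgt_not_eq, lt_0_INR; lia).
    assert (0 <= INR e * h) by (apply Rmult_le_pos; [apply pos_INR | lra]).
    assert ((INR e + 1) * h <= INR Mx * h) by (apply Rmult_le_compat_r; lra).
    rewrite clamp_id by (unfold P in Hx; lra). reflexivity.
Qed.

(** * Refined midpoint grids *)

Lemma tag_in_cell al h n e q : 0 < h -> (1 <= n)%nat -> (q < 2 * n)%nat ->
  let dl := h / (2 * INR n) in
  al + INR e * h < al + (INR (e * (2 * n) + q) + /2) * dl < al + INR e * h + h.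
Proof.
  intros Hh Hn Hq dl.
  assert (Hnr : 1 <= INR n) by (apply (le_INR 1); lia).
  assert (INR q + 1 <= 2 * INR n)
    by (rewrite <- S_INR; replace 2 with (INR 2) by (simpl; ring); rewrite <- mult_INR; apply le_INR; lia).
  pose proof (pos_INR q).
  set (s := (INR q + /2) / (2 * INR n)).
  assert (Hs0 : 0 < s) by (unfold s; apply Rdiv_lt_0_compat; lra).
  assert (Hs1 : s < 1).
  { unfold s. apply Rmult_lt_reg_r with (2 * INR n); [lra|].
    unfold Rdiv. rewrite Rmult_assoc, Rinv_l by lra. lra. }
  assert (E : al + (INR (e * (2 * n) + q) + /2) * dl = al + INR e * h + s * h)
    by (unfold dl, s; rewrite plus_INR, !mult_INR; simpl (INR 2); field; lra).
  rewrite E.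
  assert (0 < s * h) by (apply Rmult_lt_0_compat; lra).
  assert (s * h < 1 * h) by (apply Rmult_lt_compat_r; lra). lra.
Qed.

Lemma midpoint_step_refined al be M n : (1 <= M)%nat -> (1 <= n)%nat ->
  (be - al) / INR (M * (2 * n)) = (be - al) / INR M / (2 * INR n).
Proof.
  intros HM Hn. rewrite !mult_INR. simpl (INR 2).
  assert (0 < INR M) by (apply lt_0_INR; lia). assert (0 < INR n) by (apply lt_0_INR; lia).
  field. lra.
Qed.

Lemma tag_in_some_cell al be M n p : al < be -> (1 <= n)%nat -> (p < M * (2 * n))%nat ->
  let h := (be - al) / INR M in
  exists e, (e < M)%nat /\
    al + INR e * h < al + (INR p + /2) * ((be - al) / INR (M * (2 * n))) < al + INR e * h + h.
Proof.
  intros Hab Hn Hp h.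
  assert (HM : (1 <= M)%nat) by nia.
  assert (H2n : (2 * n <> 0)%nat) by lia.
  set (e := (p / (2 * n))%nat). set (q := (p mod (2 * n))%nat).
  assert (Hpe : p = (e * (2 * n) + q)%nat)
    by (unfold e, q; rewrite Nat.mul_comm; apply Nat.div_mod_eq).
  exists e. split; [apply Nat.Div0.div_lt_upper_bound; lia|].
  rewrite midpoint_step_refined by auto. fold h. rewrite Hpe.
  apply tag_in_cell; [unfold h; apply Rdiv_lt_0_compat; [lra | apply lt_0_INR; lia] | auto |].
  apply Nat.mod_upper_bound; auto.
Qed.

Lemma midpoint_tag_in a b N k : a < b -> (k < N)%nat ->
  a < a + (INR k + /2) * ((b - a) / INR N) < b.
Proof.
  intros Hab Hk. assert (HN : 0 < INR N) by (apply lt_0_INR; lia).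
  assert (INR k + 1 <= INR N) by (rewrite <- S_INR; apply le_INR; lia).
  pose proof (pos_INR k).
  assert (0 < (b - a) / INR N) by (apply Rdiv_lt_0_compat; lra).
  assert (INR N * ((b - a) / INR N) = b - a) by (field; lra).
  split; nra.
Qed.

Lemma node_sub_refined_tag al be M n I k : (1 <= M)%nat -> (1 <= n)%nat ->
  let dl := (be - al) / INR (M * (2 * n)) in
  al + INR I * ((be - al) / INR M / 2) - (al + (INR k + /2) * dl) = (INR (I * n) - (INR k + /2)) * dl.
Proof.
  intros HM Hn dl. unfold dl. rewrite !mult_INR. simpl (INR 2).
  assert (0 < INR M) by (apply lt_0_INR; lia). assert (0 < INR n) by (apply lt_0_INR; lia).
  field. lra.
Qed.

Lemma node_neq_refined_tag al be M n I k : al < be -> (1 <= M)%nat -> (1 <= n)%nat ->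
  al + INR I * ((be - al) / INR M / 2) - (al + (INR k + /2) * ((be - al) / INR (M * (2 * n)))) <> 0.
Proof.
  intros Hab HM Hn. rewrite node_sub_refined_tag by auto.
  apply Rmult_integral_contrapositive. split; [apply Rabs_half_int_nonzero|].
  apply Rgt_not_eq, Rdiv_lt_0_compat; [lra | apply lt_0_INR; nia].
Qed.

Lemma midpoint_sum_kernel_max_le g al be M n I :
  0 < g < 1 -> al < be -> (1 <= M)%nat -> (1 <= n)%nat -> (I <= 2 * M)%nat ->
  midpoint_sum (fun y => kernel_max g (al + INR I * ((be - al) / INR M / 2) - y)) al be (M * (2 * n))
  <= 2 * (2 + / (1 - g)) * Rpower (be - al) (1 - g).
Proof.
  intros Hg Hab HM Hn HI. unfold midpoint_sum, kernel_max.
  set (dl := (be - al) / INR (M * (2 * n))).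
  assert (Hdl : 0 < dl) by (apply Rdiv_lt_0_compat; [lra | apply lt_0_INR; nia]).
  rewrite (sumN_ext _ (fun k => dl * / Rpower (Rabs ((INR (I * n) - (INR k + /2)) * dl)) g))
    by (intros k _; unfold dl; rewrite node_sub_refined_tag by auto; reflexivity).
  replace (be - al) with (INR (M * (2 * n)) * dl)
    by (unfold dl; field; apply Rgt_not_eq, lt_0_INR; nia).
  apply singular_midpoint_sum_le; auto; nia.
Qed.

(** * Weighted sums of the interpolation error *)

Lemma sum_cell_bounds_le M h B3 B4 W (O : nat -> R) :
  0 <= h -> 0 <= B3 -> sumN O M <= 2 * W ->
  sumN (fun e => h * (B4 * h ^ 4 * W + B3 * h ^ 3 * O e)) M <= h ^ 4 * W * (B4 * (INR M * h) + 2 * B3).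
Proof.
  intros Hh HB3 HO.
  rewrite (sumN_ext _ (fun e => h * (B4 * h ^ 4 * W) + h ^ 4 * B3 * O e)) by (intros; ring).
  rewrite sumN_plus, sumN_const, sumN_scal.
  assert (0 <= h ^ 4 * B3) by (apply Rmult_le_pos; [apply pow_le|]; lra).
  assert (h ^ 4 * B3 * sumN O M <= h ^ 4 * B3 * (2 * W)) by (apply Rmult_le_compat_l; auto).
  lra.
Qed.

(* Each cell contributes [h^5 B4] from the quartic Taylor remainder, and [h^4 B3] times the
   oscillation of the kernel on the cell, which sums to at most twice its maximum. *)
Lemma interp1_error_weighted_sum_le al be M n f g xc I t B3 B4 :
  al < be -> (1 <= M)%nat -> (1 <= n)%nat -> 0 < g -> t <> 0 -> 0 <= B4 -> (I <= 2 * M)%nat ->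
  let h := (be - al) / INR M in
  xc = al + INR I * (h / 2) ->
  (forall m, al <= m <= be -> cubic_taylor_bound f al be m B3 B4) ->
  Rabs (midpoint_sum (fun x => (f x - interp1 al be M f x) * kernel g (xc - x) t)
          al be (M * (2 * n)))
  <= h ^ 4 * kernel_max g t * (B4 * (be - al) + 2 * B3).
Proof.
  intros Hab HM Hn Hg Ht HB4 HI h Hxc HT.
  assert (HMr : 0 < INR M) by (apply lt_0_INR; lia).
  assert (Hh : 0 < h) by (unfold h; apply Rdiv_lt_0_compat; lra).
  assert (HMh : INR M * h = be - al) by (unfold h; field; lra).
  assert (HeM : forall e, (e < M)%nat -> al <= al + INR e * h /\ al + INR e * h + h <= be).
  { intros e He. assert (INR e + 1 <= INR M) by (rewrite <- S_INR; apply le_INR; lia).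
    pose proof (pos_INR e). split; nra. }
  assert (HB3 : 0 <= B3) by (eapply cubic_taylor_bound_B3_nonneg, (HT al); lra).
  set (dl := h / (2 * INR n)).
  assert (Htg : forall e q, (e < M)%nat -> (q < 2 * n)%nat ->
            al + INR e * h < al + (INR (e * (2 * n) + q) + /2) * dl < al + INR e * h + h)
    by (intros; apply tag_in_cell; auto).
  unfold midpoint_sum. rewrite midpoint_step_refined by auto. fold h dl.
  rewrite sumN_block.
  erewrite sumN_ext.
  2:{ intros e He. apply sumN_ext. intros q Hq.
      rewrite (interp1_on_cell al be M f e _ Hab He (Htg e q He Hq)). fold h.
      rewrite <- Rmult_assoc. reflexivity. }
  eapply Rle_trans.
  - apply (cells_sum_interp_error_bound al h M n f (fun x => kernel g (xc - x) t) B3 B4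
             (kernel_max g t) (kernel_osc g t al (h / 2) xc) Hh Hn HB4).
    + intros e He. destruct (HeM e He).
      apply cubic_taylor_bound_sub with al be; try lra. apply HT. lra.
    + intros e q He Hq. rewrite Rabs_right by (left; apply kernel_pos).
      apply kernel_le_max; auto.
    + intros e q He Hq. specialize (Htg e q He Hq).
      assert (E0 : al + INR (2 * e) * (h / 2) = al + INR e * h)
        by (rewrite mult_INR; simpl (INR 2); field).
      assert (E1 : al + INR (S (2 * e)) * (h / 2) = al + INR e * h + h / 2)
        by (rewrite S_INR, mult_INR; simpl (INR 2); field).
      assert (E2 : al + INR (S (S (2 * e))) * (h / 2) = al + INR e * h + h)
        by (rewrite !S_INR, mult_INR; simpl (INR 2); field).
      rewrite <- E1. apply (kernel_osc_bound g t al (h / 2) xc I); auto; [lra|].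
      cbv beta. rewrite E0, E2. unfold dl in Htg. lra.
  - rewrite <- HMh. apply sum_cell_bounds_le; try lra.
    apply (kernel_osc_sum_le g t al (h / 2) xc I); auto; lra.
Qed.

Section DiscreteEstimate.
Variables (u : R -> R -> R) (a b c d g : R) (Mx My i j nx ny : nat) (B3 B4 : R).
Hypothesis Hab : a < b.
Hypothesis Hcd : c < d.
Hypothesis Hg : 0 < g < 1.
Hypothesis HMx : (1 <= Mx)%nat.
Hypothesis HMy : (1 <= My)%nat.
Hypothesis Hnx : (1 <= nx)%nat.
Hypothesis Hny : (1 <= ny)%nat.
Hypothesis Hi : (i <= 2 * Mx)%nat.
Hypothesis Hj : (j <= 2 * My)%nat.
Hypothesis HB4 : 0 <= B4.
Hypothesis Htx : forall y0 m, c <= y0 <= d -> a <= m <= b ->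
  cubic_taylor_bound (fun z => u z y0) a b m B3 B4.
Hypothesis Hty : forall x0 m, a <= x0 <= b -> c <= m <= d ->
  cubic_taylor_bound (fun z => u x0 z) c d m B3 B4.

Let hx := (b - a) / INR Mx.
Let hy := (d - c) / INR My.
Let xi := a + INR i * (hx / 2).
Let yj := c + INR j * (hy / 2).
Let Nx := (Mx * (2 * nx))%nat.
Let Ny := (My * (2 * ny))%nat.
Let K := 2 * (2 + / (1 - g)).

Lemma B3_nonneg : 0 <= B3.
Proof. apply (cubic_taylor_bound_B3_nonneg (fun z => u z c) a b a B3 B4), Htx; lra. Qed.

Lemma interp_error_x_part :
  Rabs (midpoint_sum (fun y => midpoint_sum (fun x =>
          (u x y - interp1 a b Mx (fun X => u X y) x) * kernel g (xi - x) (yj - y)) a b Nx) c d Ny)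
  <= hx ^ 4 * (B4 * (b - a) + 2 * B3) * (K * Rpower (d - c) (1 - g)).
Proof.
  set (C := hx ^ 4 * (B4 * (b - a) + 2 * B3)).
  assert (HC : 0 <= C).
  { pose proof B3_nonneg. apply Rmult_le_pos; [apply pow_le; unfold hx|];
      [apply Rdiv_le_0_compat; [lra | apply lt_0_INR; lia] | nra]. }
  apply Rle_trans with (midpoint_sum (fun y => C * kernel_max g (yj - y)) c d Ny).
  - apply midpoint_sum_abs_le; [lra|]. intros k Hk.
    set (t := c + (INR k + /2) * ((d - c) / INR Ny)).
    destruct (midpoint_tag_in c d Ny k Hcd Hk) as [Ht1 Ht2]. fold t in Ht1, Ht2.
    assert (Htj : yj - t <> 0) by (apply node_neq_refined_tag; auto).
    replace (C * kernel_max g (yj - t)) with (hx ^ 4 * kernel_max g (yj - t) * (B4 * (b - a) + 2 * B3))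
      by (unfold C; ring).
    apply interp1_error_weighted_sum_le with (I := i); auto; try lra.
    intros m Hm. apply Htx; lra.
  - rewrite midpoint_sum_scal. apply Rmult_le_compat_l; auto.
    apply midpoint_sum_kernel_max_le; auto.
Qed.

(* After exchanging the sums, the interpolation in [x] is a combination of three values
   with coefficients of size at most [1], each a one-dimensional sum in [y]. *)
Lemma interp_error_y_part :
  Rabs (midpoint_sum (fun y => midpoint_sum (fun x =>
          interp1 a b Mx (fun X => u X y - interp1 c d My (u X) y) x * kernel g (xi - x) (yj - y))
          a b Nx) c d Ny)
  <= 3 * hy ^ 4 * (B4 * (d - c) + 2 * B3) * (K * Rpower (b - a) (1 - g)).
Proof.
  set (C := 3 * hy ^ 4 * (B4 * (d - c) + 2 * B3)).
  assert (HC : 0 <= C).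
  { pose proof B3_nonneg. apply Rmult_le_pos; [apply Rmult_le_pos; [lra | apply pow_le; unfold hy]|];
      [apply Rdiv_le_0_compat; [lra | apply lt_0_INR; lia] | nra]. }
  rewrite (midpoint_sum_swap (fun x y =>
    interp1 a b Mx (fun X => u X y - interp1 c d My (u X) y) x * kernel g (xi - x) (yj - y))).
  apply Rle_trans with (midpoint_sum (fun x => C * kernel_max g (xi - x)) a b Nx).
  - apply midpoint_sum_abs_le; [lra|]. intros p Hp.
    set (s := a + (INR p + /2) * ((b - a) / INR Nx)).
    destruct (tag_in_some_cell a b Mx nx p Hab Hnx Hp) as [e [He Hse]]. fold s in Hse.
    assert (Hsi : xi - s <> 0) by (apply node_neq_refined_tag; auto).
    rewrite (midpoint_sum_interp1 (fun X y => u X y - interp1 c d My (u X) y)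
               (fun y => kernel g (xi - s) (yj - y))).
    replace (C * kernel_max g (xi - s))
      with (3 * (hy ^ 4 * kernel_max g (xi - s) * (B4 * (d - c) + 2 * B3))) by (unfold C; ring).
    apply (interp1_abs_le a b Mx _ e s _ Hab He Hse). intros X HX.
    rewrite (midpoint_sum_ext _ (fun y => (u X y - interp1 c d My (u X) y) * kernel g (yj - y) (xi - s)))
      by (intros; rewrite (kernel_sym g (xi - s)); reflexivity).
    apply interp1_error_weighted_sum_le with (I := j); auto; lra.
  - rewrite midpoint_sum_scal. apply Rmult_le_compat_l; auto.
    apply midpoint_sum_kernel_max_le; auto.
Qed.

Lemma midpoint_sum2_interp_error_le :
  Rabs (midpoint_sum (fun y => midpoint_sum (fun x =>
          (u x y - uQ u a b c d Mx My x y) / Rpower ((xi - x) ^ 2 + (yj - y) ^ 2) (g / 2))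
          a b Nx) c d Ny)
  <= hx ^ 4 * (B4 * (b - a) + 2 * B3) * (K * Rpower (d - c) (1 - g))
     + 3 * hy ^ 4 * (B4 * (d - c) + 2 * B3) * (K * Rpower (b - a) (1 - g)).
Proof.
  erewrite midpoint_sum_ext.
  2:{ intros y. rewrite midpoint_sum_ext with (G := fun x =>
        (u x y - interp1 a b Mx (fun X => u X y) x) * kernel g (xi - x) (yj - y)
        + interp1 a b Mx (fun X => u X y - interp1 c d My (u X) y) x * kernel g (xi - x) (yj - y)).
      - rewrite midpoint_sum_plus. reflexivity.
      - intros x. rewrite uQ_error_split. unfold kernel, Rdiv. ring. }
  rewrite midpoint_sum_plus.
  eapply Rle_trans; [apply Rabs_triang|].
  apply Rplus_le_compat; [apply interp_error_x_part | apply interp_error_y_part].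
Qed.

End DiscreteEstimate.

Lemma node_half_index a h l : node a h (INR l / 2) = a + INR l * (h / 2).
Proof. unfold node. field. Qed.

Lemma weighted_interp_error_integral_le u a b c d g Mx My i j B3 B4 :
  a < b -> c < d -> 0 < g < 1 -> (1 <= Mx)%nat -> (1 <= My)%nat ->
  (i <= 2 * Mx)%nat -> (j <= 2 * My)%nat -> 0 <= B4 -> cont_on_rect u a b c d ->
  (forall y0 m, c <= y0 <= d -> a <= m <= b -> cubic_taylor_bound (fun z => u z y0) a b m B3 B4) ->
  (forall x0 m, a <= x0 <= b -> c <= m <= d -> cubic_taylor_bound (fun z => u x0 z) c d m B3 B4) ->
  let hx := (b - a) / INR Mx in let hy := (d - c) / INR My in
  let xi := a + INR i * (hx / 2) in let yj := c + INR j * (hy / 2) in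
  let K := 2 * (2 + / (1 - g)) in
  Rabs (RInt_tot (fun y => RInt_tot (fun x =>
          (u x y - uQ u a b c d Mx My x y) / Rpower ((xi - x) ^ 2 + (yj - y) ^ 2) (g / 2)) a b) c d)
  <= hx ^ 4 * (B4 * (b - a) + 2 * B3) * (K * Rpower (d - c) (1 - g))
     + 3 * hy ^ 4 * (B4 * (d - c) + 2 * B3) * (K * Rpower (b - a) (1 - g)).
Proof.
  intros Hab Hcd Hg HMx HMy Hi Hj HB4 Hu Htx Hty hx hy xi yj K.
  apply RInt_tot2_le_of_midpoint_sums with (Kx := (2 * Mx)%nat) (Ky := (2 * My)%nat); auto; try lia.
  - intros n k Hn Hk. rewrite (Nat.mul_comm 2), <- Nat.mul_assoc in Hk |- *.
    destruct (midpoint_tag_in c d _ k Hcd Hk).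
    apply ex_RInt_weighted_interp_error; auto; try lia; try lra.
    intros Heq. apply (node_neq_refined_tag c d My n j k); auto. unfold yj, hy in Heq. lra.
  - intros nx ny Hnx Hny. rewrite !(Nat.mul_comm 2), <- !Nat.mul_assoc.
    apply midpoint_sum2_interp_error_le; auto.
Qed.

Lemma Rpower_neg_le_of_le x y g : 0 < x <= y -> 0 < g -> Rpower y (- g) <= Rpower x (- g).
Proof.
  intros Hx Hg. rewrite !Rpower_Ropp. apply Rinv_le_contravar; [apply Rpower_pos|].
  apply Rle_Rpower_l; lra.
Qed.

(* An interior half-node is at distance between [h/2] and [(b - a)/2] of the boundary,
   so [eta^-g] is bounded below independently of the mesh. *)
Lemma boundary_dist_Rpower_ge a b M i g : a < b -> (1 <= i <= 2 * M - 1)%nat -> 0 < g ->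
  let xi := a + INR i * ((b - a) / INR M / 2) in
  Rpower ((b - a) / 2) (- g) <= Rpower (Rmin (xi - a) (b - xi)) (- g).
Proof.
  intros Hab Hi Hg xi.
  assert (HM : 0 < INR M) by (apply lt_0_INR; lia).
  assert (Hi1 : 1 <= INR i) by (apply (le_INR 1); lia).
  assert (Hi2 : INR i + 1 <= 2 * INR M)
    by (rewrite <- S_INR; replace 2 with (INR 2) by (simpl; ring); rewrite <- mult_INR; apply le_INR; lia).
  assert (Hh : 0 < (b - a) / INR M) by (apply Rdiv_lt_0_compat; lra).
  assert (HMh : INR M * ((b - a) / INR M) = b - a) by (field; lra).
  assert (Hp1 : 0 < xi - a) by (unfold xi; nra).
  assert (Hp2 : 0 < b - xi) by (unfold xi; nra).
  apply Rpower_neg_le_of_le; auto. split; [apply Rmin_pos; auto|].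
  unfold Rmin. destruct Rle_dec; lra.
Qed.

Lemma le_scaled_sum p q A B rho X Y Z W :
  0 <= p -> 0 <= q -> 0 <= A -> 0 <= B -> 0 < rho -> rho <= X -> rho <= Y -> 0 <= Z -> 0 <= W ->
  p * A + q * B <= (A + B) / rho * (p * X + q * Y + Z + W).
Proof.
  intros Hp Hq HA HB Hr HX HY HZ HW.
  assert (HAB : 0 <= (A + B) / rho) by (apply Rdiv_le_0_compat; lra).
  apply Rle_trans with ((A + B) / rho * (p * rho + q * rho)).
  - replace ((A + B) / rho * (p * rho + q * rho)) with ((A + B) * (p + q)) by (field; lra). nra.
  - apply Rmult_le_compat_l; auto.
    assert (p * rho <= p * X) by (apply Rmult_le_compat_l; auto).
    assert (q * rho <= q * Y) by (apply Rmult_le_compat_l; auto). lra.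
Qed.

Theorem lemma3p12 (a b c d gamma : R) (u : R -> R -> R) :
  a < b -> c < d -> 0 < gamma < 1 -> Ck_rect 6 u a b c d ->
  exists C : R, forall (Mx My i j : nat),
    (2 <= Mx)%nat -> (2 <= My)%nat ->
    (1 <= i <= 2 * Mx - 1)%nat -> (1 <= j <= 2 * My - 1)%nat ->
    let hx := (b - a) / INR Mx in
    let hy := (d - c) / INR My in
    let xi := node a hx (INR i / 2) in
    let yj := node c hy (INR j / 2) in
    let eta := Rmin (xi - a) (b - xi) in
    let eta' := Rmin (yj - c) (d - yj) in
    Rabs (RInt_tot (fun y =>
            RInt_tot (fun x =>
              (u x y - uQ u a b c d Mx My x y) /
              Rpower ((xi - x) ^ 2 + (yj - y) ^ 2) (gamma / 2)) a b) c d)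
    <= C * (hx ^ 4 * Rpower eta (- gamma) + hy ^ 4 * Rpower eta' (- gamma)
            + Rpower hx (5 - gamma) + Rpower hy (5 - gamma)).
Proof.
  intros Hab Hcd Hg Hu.
  destruct (Ck_rect_cubic_taylor 6 u a b c d ltac:(lia) Hab Hcd Hu) as [B3 [B4 [HB4 [Htx Hty]]]].
  assert (HB3 : 0 <= B3) by (apply (cubic_taylor_bound_B3_nonneg (fun z => u z c) a b a B3 B4), Htx; lra).
  set (K := 2 * (2 + / (1 - gamma))).
  assert (HK : 0 < K) by (unfold K; pose proof (Rinv_0_lt_compat (1 - gamma) ltac:(lra)); lra).
  set (Cx := (B4 * (b - a) + 2 * B3) * (K * Rpower (d - c) (1 - gamma))).
  set (Cy := 3 * (B4 * (d - c) + 2 * B3) * (K * Rpower (b - a) (1 - gamma))).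
  set (rho := Rmin (Rpower ((b - a) / 2) (- gamma)) (Rpower ((d - c) / 2) (- gamma))).
  exists ((Cx + Cy) / rho).
  intros Mx My i j HMx HMy Hi Hj hx hy xi yj eta eta'.
  pose proof (weighted_interp_error_integral_le u a b c d gamma Mx My i j B3 B4 Hab Hcd Hg
                ltac:(lia) ltac:(lia) ltac:(lia) ltac:(lia) HB4 (Ck_rect_cont_on_rect _ _ _ _ _ _ Hu)
                Htx Hty) as Hint.
  cbv zeta in Hint. unfold eta, eta', xi, yj, hx, hy. rewrite !node_half_index.
  eapply Rle_trans; [exact Hint|].
  match goal with |- ?L <= _ =>
    replace L with (((b - a) / INR Mx) ^ 4 * Cx + ((d - c) / INR My) ^ 4 * Cy)
      by (unfold Cx, Cy, K; ring) end.
  apply le_scaled_sum; try apply pow_le; try apply Rdiv_le_0_compat; try (left; apply Rpower_pos);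
    try (apply lt_0_INR; lia); try lra.
  - unfold Cx. pose proof (Rpower_pos (d - c) (1 - gamma)). apply Rmult_le_pos; nra.
  - unfold Cy. pose proof (Rpower_pos (b - a) (1 - gamma)). apply Rmult_le_pos; nra.
  - apply Rmin_pos; apply Rpower_pos.
  - eapply Rle_trans; [apply Rmin_l | apply boundary_dist_Rpower_ge; auto; lra].
  - eapply Rle_trans; [apply Rmin_r | apply boundary_dist_Rpower_ge; auto; lra].
Qed.
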